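(* Let $\Omega\subset\mathbb{R}^3$ be open, let $x\in\Omega$ and $0<r<\operatorname{dist}(x,\partial\Omega)$. Let $u\in C^2(\Omega)^3$ satisfy $\nabla\cdot u=0$, let $v\in\mathbb{R}^3$, and let $p$ be a (classical) solution of $-\Delta p=\nabla\cdot(u\cdot\nabla u)$ in $\Omega$. Then $$p(x)+\tfrac13|u(x)-v|^2=\overline{p}(x,r)+\fint_{|\xi|=1}\big|\xi\cdot(u(x+r\xi)-v)\big|^2dS(\xi)+\int_0^r\frac{d\rho}{\rho}\fint_{|\xi|=1}\Big[3\big|\xi\cdot(u(x+\rho\xi)-v)\big|^2-|u(x+\rho\xi)-v|^2\Big]dS(\xi).$$
   Context: For a function $f$, $\overline{f}(x,r)=\frac{1}{4\pi r^2}\int_{|x-y|=r}f(y)\,dS(y)=\fint_{|\xi|=1}f(x+r\xi)\,dS(\xi)$ denotes the spherical average, where $\fint$ denotes the integral over the unit sphere divided by its area $4\pi$. *)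

From Stdlib Require Import Reals Lra.
From Coquelicot Require Import Coquelicot.
Open Scope R_scope.

Inductive idx : Type := I1 | I2 | I3.
Definition vec3 := idx -> R.

Definition sum3 (f : idx -> R) : R := f I1 + f I2 + f I3.
Definition dot (a b : vec3) : R := sum3 (fun i => a i * b i).
Definition norm3 (a : vec3) : R := sqrt (dot a a).
Definition vadd (a b : vec3) : vec3 := fun i => a i + b i.
Definition vsub (a b : vec3) : vec3 := fun i => a i - b i.
Definition vscal (c : R) (a : vec3) : vec3 := fun i => c * a i.
Definition ebasis (i : idx) : vec3 := fun j =>
  match i, j with
  | I1, I1 | I2, I2 | I3, I3 => 1
  | _, _ => 0
  end.

Definition open3 (O : vec3 -> Prop) : Prop :=
  forall y, O y -> exists e, 0 < e /\ forall z, norm3 (vsub z y) < e -> O z.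

Definition in_closure (O : vec3 -> Prop) (z : vec3) : Prop :=
  forall e, 0 < e -> exists w, O w /\ norm3 (vsub w z) < e.
Definition in_interior (O : vec3 -> Prop) (z : vec3) : Prop :=
  exists e, 0 < e /\ forall w, norm3 (vsub w z) < e -> O w.
Definition boundary (O : vec3 -> Prop) (z : vec3) : Prop :=
  in_closure O z /\ ~ in_interior O z.

(* r < dist(x, boundary O), with dist(x, empty set) = +infinity:
   the infimum of |z - x| over boundary points z is strictly larger than r. *)
Definition lt_dist_boundary (r : R) (x : vec3) (O : vec3 -> Prop) : Prop :=
  exists d, r < d /\ forall z, boundary O z -> d <= norm3 (vsub z x).

Definition partial (i : idx) (f : vec3 -> R) (y : vec3) : R :=
  Derive (fun t => f (vadd y (vscal t (ebasis i)))) 0.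

Definition cont_on (O : vec3 -> Prop) (f : vec3 -> R) : Prop :=
  forall y, O y -> forall e, 0 < e -> exists d, 0 < d /\
    forall z, norm3 (vsub z y) < d -> Rabs (f z - f y) < e.

Fixpoint Ck (k : nat) (O : vec3 -> Prop) (f : vec3 -> R) : Prop :=
  match k with
  | O => cont_on O f
  | S k' => cont_on O f /\
      forall i, (forall y, O y -> ex_derive (fun t => f (vadd y (vscal t (ebasis i)))) 0)
                /\ Ck k' O (partial i f)
  end.

Definition ucomp (u : vec3 -> vec3) (i : idx) : vec3 -> R := fun y => u y i.
Definition div (u : vec3 -> vec3) (y : vec3) : R :=
  sum3 (fun i => partial i (ucomp u i) y).
Definition convect (u : vec3 -> vec3) : vec3 -> vec3 :=
  fun y i => sum3 (fun j => u y j * partial j (ucomp u i) y).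
Definition laplacian (f : vec3 -> R) (y : vec3) : R :=
  sum3 (fun i => partial i (partial i f) y).

Definition sph (theta phi : R) : vec3 := fun i =>
  match i with
  | I1 => sin theta * cos phi
  | I2 => sin theta * sin phi
  | I3 => cos theta
  end.

(* Averaged surface integral over the unit sphere:
   (1/(4 pi)) * integral over S^2 of g dS, with dS = sin theta dtheta dphi. *)
Definition sph_avg (g : vec3 -> R) : R :=
  / (4 * PI) *
  RInt (fun phi => RInt (fun theta => g (sph theta phi) * sin theta) 0 PI) 0 (2 * PI).

Definition sph_mean (f : vec3 -> R) (x : vec3) (r : R) : R :=
  sph_avg (fun xi => f (vadd x (vscal r xi))).

(* Write [w = u - v] and let [A rho] be the spherical mean of [p + (xi.w)^2] on the sphere of
   radius [rho] around [x]; then [A 0 = p x + |w x|^2 / 3], and the identity amounts to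
   [mean (3 (xi.w)^2 - |w|^2) = - rho A'(rho)] followed by the fundamental theorem of calculus.
   That relation is the surface divergence theorem for the tangential part of a field [V],
   [int_S (rho (div V - xi.(DV xi)) - 2 xi.V) = 0], applied to [V y = p y (y - x) + ((y - x).w) w]:
   since [div u = 0] its integrand is
   [rho (- (3 (xi.w)^2 - |w|^2) + rho xi.(grad p + (w.grad) u) - rho d/drho (p + (xi.w)^2))].
   The middle flux vanishes: [grad p + (u.grad) u] is divergence free by the pressure equation, the
   flux of a divergence-free field through spheres vanishes because [(rho^2 flux)' = 0], and the
   flux of [(v.grad) u] is the derivative of the (zero) flux of [u] as the centre moves along [v]. *)

From Stdlib Require Import Reals Lra Nsatz FunctionalExtensionality ClassicalEpsilon Classical.
From Coquelicot Require Import Coquelicot.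
Open Scope R_scope.

(* Coquelicot states its calculus lemmas with the operations [plus], [scal], [opp], ... of its
   algebraic hierarchy; [Req] turns such an equation into one between plain reals. *)
Ltac Rops := repeat match goal with
  | |- context [mult ?a ?b] => change (mult a b) with (Rmult a b)
  | |- context [plus ?a ?b] => change (plus a b) with (Rplus a b)
  | |- context [scal ?a ?b] => change (scal a b) with (Rmult a b)
  | |- context [opp ?a] => change (opp a) with (Ropp a)
  | |- context [minus ?a ?b] => change (minus a b) with (Rminus a b)
  | |- context [@zero ?G] => change (@zero G) with R0
  | |- context [@one ?G] => change (@one G) with R1
  end.
Ltac Req := Rops; match goal with |- @eq _ ?a ?b => change (@eq R a b) end.

Lemma vec3_ext (a b : vec3) : (forall i, a i = b i) -> a = b.
Proof. intros; apply functional_extensionality; auto. Qed.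

Definition mkv (a b c : R) : vec3 := fun i => match i with I1 => a | I2 => b | I3 => c end.

Lemma Rabs_triang3 a b c : Rabs (a + b + c) <= Rabs a + Rabs b + Rabs c.
Proof. eapply Rle_trans. apply Rabs_triang. pose proof (Rabs_triang a b). lra. Qed.

Lemma dot_self_ge0 a : 0 <= dot a a.
Proof. unfold dot, sum3. nra. Qed.

Lemma norm3_ge0 a : 0 <= norm3 a.
Proof. apply sqrt_pos. Qed.

Lemma norm3_le_coordwise a b : (forall i, Rabs (a i) <= Rabs (b i)) -> norm3 a <= norm3 b.
Proof.
  intros H. unfold norm3. apply sqrt_le_1_alt. unfold dot, sum3.
  assert (Hsq : forall i, a i * a i <= b i * b i)
    by (intros i; apply (Rsqr_le_abs_1 (a i) (b i)), H).
  pose proof (Hsq I1); pose proof (Hsq I2); pose proof (Hsq I3). lra.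
Qed.

Lemma abs_coord_le_norm3 a i : Rabs (a i) <= norm3 a.
Proof.
  unfold norm3. rewrite <- sqrt_Rsqr_abs. apply sqrt_le_1_alt.
  unfold dot, sum3, Rsqr. destruct i; nra.
Qed.

Lemma norm3_le_sum_abs a : norm3 a <= Rabs (a I1) + Rabs (a I2) + Rabs (a I3).
Proof.
  pose proof (Rabs_pos (a I1)); pose proof (Rabs_pos (a I2)); pose proof (Rabs_pos (a I3)).
  unfold norm3. rewrite <- (sqrt_Rsqr (Rabs (a I1) + Rabs (a I2) + Rabs (a I3))) by lra.
  apply sqrt_le_1_alt. unfold dot, sum3, Rsqr.
  pose proof (Rsqr_abs (a I1)); pose proof (Rsqr_abs (a I2)); pose proof (Rsqr_abs (a I3)).
  unfold Rsqr in *. nra.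
Qed.

Lemma norm3_lt_of_coords a e : (forall i, Rabs (a i) < e / 3) -> norm3 a < e.
Proof.
  intros H. eapply Rle_lt_trans. apply norm3_le_sum_abs.
  pose proof (H I1); pose proof (H I2); pose proof (H I3). lra.
Qed.

Lemma norm3_scal c a : norm3 (vscal c a) = Rabs c * norm3 a.
Proof.
  unfold norm3. rewrite <- sqrt_Rsqr_abs, <- sqrt_mult_alt by apply Rle_0_sqr.
  f_equal. unfold dot, sum3, vscal, Rsqr. ring.
Qed.

Lemma norm3_sub_diag a : norm3 (vsub a a) = 0.
Proof.
  unfold norm3, dot, sum3, vsub. rewrite <- sqrt_0. f_equal. ring.
Qed.

Lemma dot_le_norm3 a b : dot a b <= norm3 a * norm3 b.
Proof.
  unfold norm3. rewrite <- sqrt_mult_alt by apply dot_self_ge0.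
  destruct (Rle_or_lt (dot a b) 0) as [H|H].
  - pose proof (sqrt_pos (dot a a * dot b b)). lra.
  - rewrite <- (sqrt_Rsqr (dot a b)) by lra. apply sqrt_le_1_alt.
    unfold dot, sum3, Rsqr.
    set (a1 := a I1); set (a2 := a I2); set (a3 := a I3);
    set (b1 := b I1); set (b2 := b I2); set (b3 := b I3).
    assert (Lagrange : (a1*a1+a2*a2+a3*a3)*(b1*b1+b2*b2+b3*b3) - (a1*b1+a2*b2+a3*b3)*(a1*b1+a2*b2+a3*b3)
      = (a1*b2-a2*b1)*(a1*b2-a2*b1) + (a1*b3-a3*b1)*(a1*b3-a3*b1) + (a2*b3-a3*b2)*(a2*b3-a3*b2))
      by ring.
    pose proof (Rle_0_sqr (a1*b2-a2*b1)); pose proof (Rle_0_sqr (a1*b3-a3*b1));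
      pose proof (Rle_0_sqr (a2*b3-a3*b2)).
    unfold Rsqr in *. lra.
Qed.

Lemma norm3_triangle a b : norm3 (vadd a b) <= norm3 a + norm3 b.
Proof.
  pose proof (norm3_ge0 a); pose proof (norm3_ge0 b).
  unfold norm3 at 1. rewrite <- (sqrt_Rsqr (norm3 a + norm3 b)) by lra.
  apply sqrt_le_1_alt.
  replace (dot (vadd a b) (vadd a b)) with (dot a a + 2 * dot a b + dot b b)
    by (unfold dot, sum3, vadd; ring).
  pose proof (dot_le_norm3 a b).
  assert (Ha : dot a a = norm3 a * norm3 a) by (unfold norm3; rewrite sqrt_sqrt; auto using dot_self_ge0).
  assert (Hb : dot b b = norm3 b * norm3 b) by (unfold norm3; rewrite sqrt_sqrt; auto using dot_self_ge0).
  unfold Rsqr. nra.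
Qed.

Lemma is_derive_eq (f : R -> R) x l l' : is_derive f x l -> l = l' -> is_derive f x l'.
Proof. intros H ->; auto. Qed.

Lemma is_derive_Rplus (f g : R -> R) x a b : is_derive f x a -> is_derive g x b ->
  is_derive (fun s => f s + g s) x (a + b).
Proof. intros Hf Hg. eapply is_derive_eq. apply (is_derive_plus f g); eauto. Req. ring. Qed.

Lemma is_derive_Rmult (f g : R -> R) x a b : is_derive f x a -> is_derive g x b ->
  is_derive (fun s => f s * g s) x (a * g x + f x * b).
Proof.
  intros Hf Hg. eapply is_derive_eq.
  apply (is_derive_mult f g); [exact Hf|exact Hg|intros; apply Rmult_comm]. Req. ring.
Qed.

Lemma is_derive_Rmult_r (f : R -> R) x a k : is_derive f x a -> is_derive (fun s => f s * k) x (a * k).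
Proof.
  intros H. eapply is_derive_eq. apply (is_derive_Rmult f (fun _ => k)); [exact H|apply is_derive_const].
  Req. ring.
Qed.

Lemma is_derive_Rmult_l (f : R -> R) x a k : is_derive f x a -> is_derive (fun s => k * f s) x (k * a).
Proof.
  intros H. eapply is_derive_eq. apply (is_derive_Rmult (fun _ => k) f); [apply is_derive_const|exact H].
  Req. ring.
Qed.

Lemma is_derive_sum3 (f : idx -> R -> R) df x : (forall i, is_derive (f i) x (df i)) ->
  is_derive (fun s => sum3 (fun i => f i s)) x (sum3 df).
Proof. intros H. unfold sum3. apply is_derive_Rplus; [apply is_derive_Rplus|]; apply H. Qed.

Lemma increment_le_of_is_derive (f : R -> R) t l : is_derive f t l ->
  exists d, 0 < d /\ forall h, Rabs h < d -> Rabs (f (t + h) - f t) <= (Rabs l + 1) * Rabs h.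
Proof.
  intros Hf. apply is_derive_Reals in Hf. destruct (Hf 1 Rlt_0_1) as [d Hd].
  exists d. split; [apply cond_pos|]. intros h Hh.
  destruct (Req_dec h 0) as [->|Hh0].
  { rewrite Rplus_0_r, Rminus_eq_0, !Rabs_R0. lra. }
  specialize (Hd h Hh0 Hh).
  replace (f (t + h) - f t) with (((f (t + h) - f t) / h - l + l) * h) by (field; auto).
  rewrite Rabs_mult. apply Rmult_le_compat_r; [apply Rabs_pos|].
  eapply Rle_trans; [apply Rabs_triang|]. lra.
Qed.

Lemma is_derive_of_small_increment (F : R -> R) t :
  F t = 0 ->
  (forall e, 0 < e -> exists d, 0 < d /\ forall h, Rabs h < d -> Rabs (F (t + h)) <= e * Rabs h) ->
  is_derive F t 0.
Proof.
  intros H0 H. apply is_derive_Reals. intros eps Heps.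
  destruct (H (eps / 2)) as [d [Hd Hh]]; [lra|].
  exists (mkposreal d Hd). intros h Hh0 Hhd.
  assert (Hpos : 0 < Rabs h) by (apply Rabs_pos_lt; auto).
  rewrite H0, !Rminus_0_r, Rabs_div by auto.
  apply Rle_lt_trans with (eps / 2); [|lra].
  apply Rle_div_l; [exact Hpos|]. apply Hh, Hhd.
Qed.

Definition cont_at (f : vec3 -> R) (y : vec3) : Prop := forall e, 0 < e -> exists d, 0 < d /\
  forall z, norm3 (vsub z y) < d -> Rabs (f z - f y) < e.

(* [f] is C^1 on [O] with partial derivatives [Df], expressed through the chain rule
   along differentiable paths. *)
Definition C1_on (O : vec3 -> Prop) (f : vec3 -> R) (Df : idx -> vec3 -> R) : Prop :=
  cont_on O f /\ (forall j, cont_on O (Df j)) /\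
  (forall (g : R -> vec3) (dg : vec3) t, O (g t) ->
     (forall i, is_derive (fun s => g s i) t (dg i)) ->
     is_derive (fun s => f (g s)) t (sum3 (fun j => dg j * Df j (g t)))).

Section PartialsToC1.
Variables (O : vec3 -> Prop) (f : vec3 -> R).
Hypothesis Hop : open3 O.
Hypothesis Hex : forall i w, O w -> ex_derive (fun t => f (vadd w (vscal t (ebasis i)))) 0.
Hypothesis Hcont : forall i, cont_on O (partial i f).

Lemma is_derive_along_axis i z t : O (vadd z (vscal t (ebasis i))) ->
  is_derive (fun s => f (vadd z (vscal s (ebasis i)))) t (partial i f (vadd z (vscal t (ebasis i)))).
Proof.
  intros Hz. pose proof (Derive_correct _ _ (Hex i _ Hz)) as HD.
  set (G := fun s => f (vadd (vadd z (vscal t (ebasis i))) (vscal s (ebasis i)))) in *.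
  apply (is_derive_ext (fun s => G (s - t))).
  { intros s. unfold G. f_equal. apply vec3_ext. intros j. unfold vadd, vscal. ring. }
  eapply is_derive_eq.
  - apply (is_derive_comp G (fun s => s - t) t (Derive G 0) 1).
    + replace (t - t) with 0 by ring. exact HD.
    + auto_derive; auto.
  - Req. unfold partial. fold G. ring.
Qed.

Lemma axis_increment_bound i y z h e :
  (forall t, Rmin 0 h <= t <= Rmax 0 h -> O (vadd z (vscal t (ebasis i))) /\
      Rabs (partial i f (vadd z (vscal t (ebasis i))) - partial i f y) <= e) ->
  Rabs (f (vadd z (vscal h (ebasis i))) - f z - h * partial i f y) <= e * Rabs h.
Proof.
  intros Hs.
  set (g := fun t => f (vadd z (vscal t (ebasis i)))).
  assert (Hg : forall t, Rmin 0 h <= t <= Rmax 0 h ->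
     is_derive g t (partial i f (vadd z (vscal t (ebasis i)))))
    by (intros t Ht; apply is_derive_along_axis, Hs, Ht).
  destruct (MVT_gen g 0 h (fun t => partial i f (vadd z (vscal t (ebasis i))))) as [c [Hc Hm]].
  - intros t Ht. apply Hg. lra.
  - intros t Ht. apply continuity_pt_filterlim.
    apply (ex_derive_continuous (K:=R_AbsRing) (V:=R_NormedModule) g). eexists. apply Hg, Ht.
  - assert (Hz : g 0 = f z) by (unfold g; f_equal; apply vec3_ext; intros j; unfold vadd, vscal; ring).
    unfold g in Hm, Hz. rewrite Hz in Hm.
    replace (f (vadd z (vscal h (ebasis i))) - f z - h * partial i f y)
      with ((partial i f (vadd z (vscal c (ebasis i))) - partial i f y) * h) by (rewrite Hm; ring).
    rewrite Rabs_mult. apply Rmult_le_compat_r; [apply Rabs_pos|]. apply Hs, Hc.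
Qed.

Lemma Rabs_le_between t h : Rmin 0 h <= t <= Rmax 0 h -> Rabs t <= Rabs h.
Proof.
  intros [H1 H2]. unfold Rmin, Rmax in *. destruct (Rle_dec 0 h).
  - rewrite !Rabs_right; lra.
  - rewrite !Rabs_left1; lra.
Qed.

Lemma partials_near y : O y -> forall e, 0 < e -> exists d, 0 < d /\ forall w, norm3 (vsub w y) < d ->
  O w /\ forall i, Rabs (partial i f w - partial i f y) <= e.
Proof.
  intros Hy e He.
  destruct (Hop y Hy) as [d0 [Hd0 Hb]].
  destruct (Hcont I1 y Hy e He) as [d1 [Hd1 Hc1]].
  destruct (Hcont I2 y Hy e He) as [d2 [Hd2 Hc2]].
  destruct (Hcont I3 y Hy e He) as [d3 [Hd3 Hc3]].
  exists (Rmin d0 (Rmin d1 (Rmin d2 d3))). split; [repeat apply Rmin_pos; auto|]. intros w Hw.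
  pose proof (Rmin_l d0 (Rmin d1 (Rmin d2 d3))); pose proof (Rmin_r d0 (Rmin d1 (Rmin d2 d3))).
  pose proof (Rmin_l d1 (Rmin d2 d3)); pose proof (Rmin_r d1 (Rmin d2 d3)).
  pose proof (Rmin_l d2 d3); pose proof (Rmin_r d2 d3).
  split; [apply Hb; lra|].
  intros i; destruct i; apply Rlt_le; [apply Hc1|apply Hc2|apply Hc3]; lra.
Qed.

(* Walk from [y] to [y + k] along the three coordinate axes. *)
Lemma partials_linear_approx y : O y ->
  forall e, 0 < e -> exists d, 0 < d /\ forall k, norm3 k < d ->
    Rabs (f (vadd y k) - f y - sum3 (fun j => k j * partial j f y))
      <= e * (Rabs (k I1) + Rabs (k I2) + Rabs (k I3)).
Proof.
  intros Hy e He. destruct (partials_near y Hy e He) as [d [Hd Hnear]].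
  exists d. split; [exact Hd|]. intros k Hk.
  assert (Step : forall i z (a b c : R -> R), (forall t, Rmin 0 (k i) <= t <= Rmax 0 (k i) ->
        vsub (vadd z (vscal t (ebasis i))) y = mkv (a t) (b t) (c t) /\
        Rabs (a t) <= Rabs (k I1) /\ Rabs (b t) <= Rabs (k I2) /\ Rabs (c t) <= Rabs (k I3)) ->
      Rabs (f (vadd z (vscal (k i) (ebasis i))) - f z - k i * partial i f y) <= e * Rabs (k i)).
  { intros i z a b c Hz. apply axis_increment_bound. intros t Ht.
    destruct (Hz t Ht) as [Ev [Ha [Hb Hc]]].
    assert (Hn : norm3 (vsub (vadd z (vscal t (ebasis i))) y) < d).
    { eapply Rle_lt_trans; [|exact Hk]. rewrite Ev. apply norm3_le_coordwise. intros j; destruct j; auto. }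
    destruct (Hnear _ Hn) as [HO HP]. split; auto. }
  set (z1 := vadd y (vscal (k I1) (ebasis I1))).
  set (z2 := vadd z1 (vscal (k I2) (ebasis I2))).
  assert (S1 : Rabs (f z1 - f y - k I1 * partial I1 f y) <= e * Rabs (k I1)).
  { apply (Step I1 y (fun t => t) (fun _ => 0) (fun _ => 0)). intros t Ht.
    apply Rabs_le_between in Ht. rewrite Rabs_R0. repeat split; auto using Rabs_pos.
    apply vec3_ext; intros j; destruct j; unfold vsub, vadd, vscal, ebasis, mkv; simpl; ring. }
  assert (S2 : Rabs (f z2 - f z1 - k I2 * partial I2 f y) <= e * Rabs (k I2)).
  { apply (Step I2 z1 (fun _ => k I1) (fun t => t) (fun _ => 0)). intros t Ht.
    apply Rabs_le_between in Ht. rewrite Rabs_R0. repeat split; auto using Rabs_pos, Rle_refl.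
    apply vec3_ext; intros j; destruct j; unfold z1, vsub, vadd, vscal, ebasis, mkv; simpl; ring. }
  assert (S3 : Rabs (f (vadd y k) - f z2 - k I3 * partial I3 f y) <= e * Rabs (k I3)).
  { replace (vadd y k) with (vadd z2 (vscal (k I3) (ebasis I3)))
      by (apply vec3_ext; intros j; destruct j; unfold z2, z1, vadd, vscal, ebasis; simpl; ring).
    apply (Step I3 z2 (fun _ => k I1) (fun _ => k I2) (fun t => t)). intros t Ht.
    apply Rabs_le_between in Ht. repeat split; auto using Rle_refl.
    apply vec3_ext; intros j; destruct j; unfold z2, z1, vsub, vadd, vscal, ebasis, mkv; simpl; ring. }
  replace (f (vadd y k) - f y - sum3 (fun j => k j * partial j f y))
    with ((f z1 - f y - k I1 * partial I1 f y) + (f z2 - f z1 - k I2 * partial I2 f y)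
          + (f (vadd y k) - f z2 - k I3 * partial I3 f y)) by (unfold sum3; ring).
  eapply Rle_trans; [apply Rabs_triang3|]. lra.
Qed.

Lemma path_increment_le (g : R -> vec3) (dg : vec3) t : (forall i, is_derive (fun s => g s i) t (dg i)) ->
  exists d, 0 < d /\ forall h, Rabs h < d -> forall i,
    Rabs (g (t + h) i - g t i) <= (Rabs (dg i) + 1) * Rabs h.
Proof.
  intros Hg.
  destruct (increment_le_of_is_derive _ _ _ (Hg I1)) as [d1 [Hd1 H1]].
  destruct (increment_le_of_is_derive _ _ _ (Hg I2)) as [d2 [Hd2 H2]].
  destruct (increment_le_of_is_derive _ _ _ (Hg I3)) as [d3 [Hd3 H3]].
  exists (Rmin d1 (Rmin d2 d3)). split; [repeat apply Rmin_pos; auto|].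
  intros h Hh i. pose proof (Rmin_l d1 (Rmin d2 d3)). pose proof (Rmin_r d1 (Rmin d2 d3)).
  pose proof (Rmin_l d2 d3). pose proof (Rmin_r d2 d3).
  destruct i; [apply H1|apply H2|apply H3]; lra.
Qed.

Lemma is_derive_comp_partials (g : R -> vec3) (dg : vec3) t : O (g t) ->
  (forall i, is_derive (fun s => g s i) t (dg i)) ->
  is_derive (fun s => f (g s)) t (sum3 (fun j => dg j * partial j f (g t))).
Proof.
  intros Hy Hg. set (y := g t).
  set (Rem := fun s => f (g s) - f y - sum3 (fun j => (g s j - y j) * partial j f y)).
  apply (is_derive_ext (fun s => (f y + sum3 (fun j => (g s j - y j) * partial j f y)) + Rem s)).
  { intros s. unfold Rem. Req. ring. }
  eapply is_derive_eq; [apply is_derive_Rplus; [apply is_derive_Rplus|]|].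
  - apply is_derive_const.
  - apply (is_derive_sum3 (fun j s => (g s j - y j) * partial j f y) (fun j => dg j * partial j f y)).
    intros j. apply is_derive_Rmult_r. eapply is_derive_eq.
    + apply (is_derive_minus (fun s => g s j) (fun _ => y j)); [apply Hg|apply is_derive_const].
    + Req. ring.
  - apply is_derive_of_small_increment; [unfold Rem, y, sum3; ring|].
    intros e He.
    set (C := (Rabs (dg I1) + 1) + (Rabs (dg I2) + 1) + (Rabs (dg I3) + 1)).
    assert (HC : 3 <= C) by (unfold C; pose proof (Rabs_pos (dg I1));
      pose proof (Rabs_pos (dg I2)); pose proof (Rabs_pos (dg I3)); lra).
    destruct (partials_linear_approx y Hy (e / C)) as [dF [HdF HF]].
    { apply Rdiv_lt_0_compat; lra. }
    destruct (path_increment_le g dg t Hg) as [dL [HdL HL]].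
    exists (Rmin dL (dF / C)). split; [apply Rmin_pos; [|apply Rdiv_lt_0_compat]; lra|].
    intros h Hh. pose proof (Rmin_l dL (dF / C)). pose proof (Rmin_r dL (dF / C)).
    set (k := vsub (g (t + h)) y).
    assert (Hk : forall i, Rabs (k i) <= (Rabs (dg i) + 1) * Rabs h) by (intros i; apply HL; lra).
    assert (Hsum : Rabs (k I1) + Rabs (k I2) + Rabs (k I3) <= C * Rabs h).
    { pose proof (Hk I1); pose proof (Hk I2); pose proof (Hk I3). unfold C. lra. }
    assert (Hkn : norm3 k < dF).
    { eapply Rle_lt_trans; [apply norm3_le_sum_abs|].
      eapply Rle_lt_trans; [exact Hsum|].
      apply (Rmult_lt_reg_r (/ C)); [apply Rinv_0_lt_compat; lra|].
      replace (C * Rabs h * / C) with (Rabs h) by (field; lra). unfold Rdiv in *. lra. }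
    specialize (HF k Hkn).
    replace (vadd y k) with (g (t + h)) in HF by (apply vec3_ext; intros i; unfold k, vadd, vsub; ring).
    unfold Rem. eapply Rle_trans; [exact HF|].
    replace (e * Rabs h) with (e / C * (C * Rabs h)) by (field; lra).
    apply Rmult_le_compat_l; [apply Rlt_le, Rdiv_lt_0_compat; lra|exact Hsum].
  - Req. unfold sum3. ring.
Qed.

End PartialsToC1.

Lemma C1_on_of_Ck1 (O : vec3 -> Prop) f : open3 O -> Ck 1 O f -> C1_on O f (fun j => partial j f).
Proof.
  intros Hop [Hc Hi]. split; [auto|split].
  - intros j. apply (Hi j).
  - intros g dg t Hy Hg. apply is_derive_comp_partials with (O := O); auto.
    + intros i w Hw. apply (Hi i), Hw.
    + intros i. apply (Hi i).
Qed.

Lemma Rmult_near x0 y0 e : 0 < e -> exists eta, 0 < eta /\ forall x y,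
  Rabs (x - x0) < eta -> Rabs (y - y0) < eta -> Rabs (x * y - x0 * y0) < e.
Proof.
  intros He. set (S := Rabs x0 + Rabs y0 + 1).
  assert (HS : 1 <= S) by (unfold S; pose proof (Rabs_pos x0); pose proof (Rabs_pos y0); lra).
  set (m := Rmin 1 (e / S)).
  assert (Hm : 0 < m) by (apply Rmin_pos; [lra|apply Rdiv_lt_0_compat; lra]).
  assert (Hm1 : m <= 1) by apply Rmin_l.
  assert (HmS : m * S <= e).
  { replace e with (e / S * S) by (field; lra). apply Rmult_le_compat_r; [lra|apply Rmin_r]. }
  exists m. split; [exact Hm|]. intros x y Hx Hy.
  replace (x * y - x0 * y0) with ((x - x0) * (y - y0) + x0 * (y - y0) + (x - x0) * y0) by ring.
  eapply Rle_lt_trans; [apply Rabs_triang3|]. rewrite !Rabs_mult.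
  pose proof (Rabs_pos (x - x0)); pose proof (Rabs_pos (y - y0)).
  pose proof (Rabs_pos x0); pose proof (Rabs_pos y0).
  assert (Rabs (x - x0) * Rabs (y - y0) < m) by nra.
  assert (Rabs x0 * Rabs (y - y0) <= Rabs x0 * m) by (apply Rmult_le_compat_l; lra).
  assert (Rabs (x - x0) * Rabs y0 <= m * Rabs y0) by (apply Rmult_le_compat_r; lra).
  unfold S in HmS. nra.
Qed.

Lemma cont_at_plus f g y : cont_at f y -> cont_at g y -> cont_at (fun z => f z + g z) y.
Proof.
  intros Hf Hg e He.
  destruct (Hf (e/2)) as [d1 [Hd1 H1]]; [lra|]. destruct (Hg (e/2)) as [d2 [Hd2 H2]]; [lra|].
  exists (Rmin d1 d2). split; [apply Rmin_pos; auto|]. intros z Hz.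
  pose proof (Rmin_l d1 d2); pose proof (Rmin_r d1 d2).
  replace (f z + g z - (f y + g y)) with ((f z - f y) + (g z - g y)) by ring.
  eapply Rle_lt_trans; [apply Rabs_triang|].
  pose proof (H1 z ltac:(lra)); pose proof (H2 z ltac:(lra)). lra.
Qed.

Lemma cont_at_mult f g y : cont_at f y -> cont_at g y -> cont_at (fun z => f z * g z) y.
Proof.
  intros Hf Hg e He. destruct (Rmult_near (f y) (g y) e He) as [eta [Heta H]].
  destruct (Hf eta Heta) as [d1 [Hd1 H1]]. destruct (Hg eta Heta) as [d2 [Hd2 H2]].
  exists (Rmin d1 d2). split; [apply Rmin_pos; auto|]. intros z Hz.
  pose proof (Rmin_l d1 d2); pose proof (Rmin_r d1 d2).
  apply H; [apply H1|apply H2]; lra.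
Qed.

Lemma cont_at_const c y : cont_at (fun _ => c) y.
Proof. intros e He. exists 1. split; [lra|]. intros. rewrite Rminus_eq_0, Rabs_R0. auto. Qed.

Lemma cont_at_minus f g y : cont_at f y -> cont_at g y -> cont_at (fun z => f z - g z) y.
Proof.
  intros Hf Hg.
  replace (fun z => f z - g z) with (fun z => f z + (fun _ => -1) z * g z)
    by (apply functional_extensionality; intros z; ring).
  apply cont_at_plus, cont_at_mult; auto using cont_at_const.
Qed.

Lemma cont_at_coord i y : cont_at (fun z => z i) y.
Proof.
  intros e He. exists e. split; [auto|]. intros z Hz.
  eapply Rle_lt_trans; [apply (abs_coord_le_norm3 (vsub z y) i)|exact Hz].
Qed.

Section C1Calculus.
Variable O : vec3 -> Prop.

Lemma C1_on_plus f g Df Dg : C1_on O f Df -> C1_on O g Dg ->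
  C1_on O (fun y => f y + g y) (fun j y => Df j y + Dg j y).
Proof.
  intros [Hf1 [Hf2 Hf3]] [Hg1 [Hg2 Hg3]]. split; [|split].
  - intros y Hy. apply cont_at_plus; [exact (Hf1 y Hy)|exact (Hg1 y Hy)].
  - intros j y Hy. apply cont_at_plus; [exact (Hf2 j y Hy)|exact (Hg2 j y Hy)].
  - intros g0 dg t Ht Hd. eapply is_derive_eq.
    + apply (is_derive_Rplus (fun s => f (g0 s)) (fun s => g (g0 s))); [apply Hf3|apply Hg3]; auto.
    + Req. unfold sum3. ring.
Qed.

Lemma C1_on_minus f g Df Dg : C1_on O f Df -> C1_on O g Dg ->
  C1_on O (fun y => f y - g y) (fun j y => Df j y - Dg j y).
Proof.
  intros [Hf1 [Hf2 Hf3]] [Hg1 [Hg2 Hg3]]. split; [|split].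
  - intros y Hy. apply cont_at_minus; [exact (Hf1 y Hy)|exact (Hg1 y Hy)].
  - intros j y Hy. apply cont_at_minus; [exact (Hf2 j y Hy)|exact (Hg2 j y Hy)].
  - intros g0 dg t Ht Hd. eapply is_derive_eq.
    + apply (is_derive_minus (fun s => f (g0 s)) (fun s => g (g0 s))); [apply Hf3|apply Hg3]; auto.
    + Req. unfold sum3. ring.
Qed.

Lemma C1_on_mult f g Df Dg : C1_on O f Df -> C1_on O g Dg ->
  C1_on O (fun y => f y * g y) (fun j y => Df j y * g y + f y * Dg j y).
Proof.
  intros [Hf1 [Hf2 Hf3]] [Hg1 [Hg2 Hg3]]. split; [|split].
  - intros y Hy. apply cont_at_mult; [exact (Hf1 y Hy)|exact (Hg1 y Hy)].
  - intros j y Hy. apply cont_at_plus; apply cont_at_mult;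
      first [exact (Hf1 y Hy) | exact (Hg1 y Hy) | exact (Hf2 j y Hy) | exact (Hg2 j y Hy)].
  - intros g0 dg t Ht Hd. eapply is_derive_eq.
    + apply (is_derive_Rmult (fun s => f (g0 s)) (fun s => g (g0 s))); [apply Hf3|apply Hg3]; auto.
    + Req. unfold sum3. ring.
Qed.

Lemma C1_on_sum3 (f : idx -> vec3 -> R) (Df : idx -> idx -> vec3 -> R) :
  (forall k, C1_on O (f k) (Df k)) ->
  C1_on O (fun y => sum3 (fun k => f k y)) (fun j y => sum3 (fun k => Df k j y)).
Proof. intros H. unfold sum3. apply C1_on_plus; [apply C1_on_plus|]; auto. Qed.

Lemma C1_on_const c : C1_on O (fun _ => c) (fun _ _ => 0).
Proof.
  split; [|split].
  - intros y Hy; apply cont_at_const.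
  - intros j y Hy; apply cont_at_const.
  - intros g0 dg t Ht Hd. eapply is_derive_eq; [apply is_derive_const|]. Req. unfold sum3. ring.
Qed.

Lemma C1_on_coord i : C1_on O (fun y => y i) (fun j _ => ebasis j i).
Proof.
  split; [|split].
  - intros y Hy; apply cont_at_coord.
  - intros j y Hy; apply cont_at_const.
  - intros g0 dg t Ht Hd. eapply is_derive_eq; [apply Hd|].
    Req. destruct i; unfold sum3, ebasis; simpl; ring.
Qed.

Lemma partial_of_C1_on f Df j y : O y -> C1_on O f Df -> partial j f y = Df j y.
Proof.
  intros Hy [_ [_ H]].
  set (g := fun s => vadd y (vscal s (ebasis j))).
  assert (Hg0 : g 0 = y) by (apply vec3_ext; intros i; unfold g, vadd, vscal; ring).
  assert (Hd : forall i, is_derive (fun s => g s i) 0 (ebasis j i)).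
  { intros i. unfold g, vadd, vscal. auto_derive; auto. ring. }
  specialize (H g (ebasis j) 0). rewrite Hg0 in H. specialize (H Hy Hd).
  unfold partial. etransitivity; [apply is_derive_unique, H|].
  destruct j; unfold sum3, ebasis; simpl; ring.
Qed.

Lemma C1_on_ext f Df Dg : open3 O -> C1_on O f Df -> (forall j y, O y -> Df j y = Dg j y) ->
  C1_on O f Dg.
Proof.
  intros Hop [H1 [H2 H3]] HD. split; [auto|split].
  - intros j y Hy e He. destruct (H2 j y Hy e He) as [d [Hd Hz]].
    destruct (Hop y Hy) as [d' [Hd' Hb]].
    exists (Rmin d d'). split; [apply Rmin_pos; auto|]. intros z Hz'.
    pose proof (Rmin_l d d'); pose proof (Rmin_r d d').
    rewrite <- !HD by (auto; apply Hb; lra). apply Hz. lra.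
  - intros g0 dg t Ht Hd. eapply is_derive_eq; [apply H3; auto|].
    unfold sum3. rewrite !HD; auto.
Qed.

End C1Calculus.

Definition cont2 (f : R -> R -> R) a b := forall e, 0 < e -> exists d, 0 < d /\
  forall a' b', Rabs (a' - a) < d -> Rabs (b' - b) < d -> Rabs (f a' b' - f a b) < e.
Definition cont3 (f : R -> R -> R -> R) a b c := forall e, 0 < e -> exists d, 0 < d /\
  forall a' b' c', Rabs (a' - a) < d -> Rabs (b' - b) < d -> Rabs (c' - c) < d ->
    Rabs (f a' b' c' - f a b c) < e.

Lemma continuous_of_eps (f : R -> R) x : (forall e, 0 < e -> exists d, 0 < d /\
  forall x', Rabs (x' - x) < d -> Rabs (f x' - f x) < e) -> continuous f x.
Proof.
  intros H. apply filterlim_locally. intros eps.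
  destruct (H eps (cond_pos eps)) as [d [Hd H']]. exists (mkposreal d Hd).
  intros y Hy. apply H', Hy.
Qed.

Lemma cont3_continuous_3 J u v t : cont3 J u v t -> continuous (J u v) t.
Proof.
  intros H. apply continuous_of_eps. intros e He. destruct (H e He) as [d [Hd H']].
  exists d. split; [auto|]. intros. apply H'; auto; rewrite Rminus_eq_0, Rabs_R0; auto.
Qed.

Lemma cont2_continuous_1 (f : R -> R -> R) u v : cont2 f u v -> continuous (fun x => f x v) u.
Proof.
  intros H. apply continuous_of_eps. intros e He. destruct (H e He) as [d [Hd H']].
  exists d. split; [auto|]. intros. apply H'; auto. rewrite Rminus_eq_0, Rabs_R0; auto.
Qed.

Lemma cont2_continuous_2 (f : R -> R -> R) u v : cont2 f u v -> continuous (f u) v.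
Proof.
  intros H. apply continuous_of_eps. intros e He. destruct (H e He) as [d [Hd H']].
  exists d. split; [auto|]. intros. apply H'; auto. rewrite Rminus_eq_0, Rabs_R0; auto.
Qed.

Lemma cont3_of_cont2 (f : R -> R -> R) u v t : cont2 f u t -> cont3 (fun x _ z => f x z) u v t.
Proof.
  intros H e He. destruct (H e He) as [d [Hd H']]. exists d. split; [auto|]. intros. apply H'; auto.
Qed.

Lemma cont2_of_cont3 (K : R -> R -> R -> R) u v t : cont3 K u v t -> cont2 (fun x z => K x v z) u t.
Proof.
  intros H e He. destruct (H e He) as [d [Hd H']]. exists d. split; [auto|]. intros. apply H'; auto.
  rewrite Rminus_eq_0, Rabs_R0; auto.
Qed.

Section Cont3Algebra.
Variables (a b c : R).

Lemma cont3_plus f g : cont3 f a b c -> cont3 g a b c -> cont3 (fun x y z => f x y z + g x y z) a b c.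
Proof.
  intros Hf Hg e He.
  destruct (Hf (e/2)) as [d1 [Hd1 H1]]; [lra|]. destruct (Hg (e/2)) as [d2 [Hd2 H2]]; [lra|].
  exists (Rmin d1 d2). split; [apply Rmin_pos; auto|]. intros a' b' c' Ha Hb Hc.
  pose proof (Rmin_l d1 d2); pose proof (Rmin_r d1 d2).
  replace (f a' b' c' + g a' b' c' - (f a b c + g a b c))
    with ((f a' b' c' - f a b c) + (g a' b' c' - g a b c)) by ring.
  eapply Rle_lt_trans; [apply Rabs_triang|].
  pose proof (H1 a' b' c' ltac:(lra) ltac:(lra) ltac:(lra)).
  pose proof (H2 a' b' c' ltac:(lra) ltac:(lra) ltac:(lra)). lra.
Qed.

Lemma cont3_mult f g : cont3 f a b c -> cont3 g a b c -> cont3 (fun x y z => f x y z * g x y z) a b c.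
Proof.
  intros Hf Hg e He. destruct (Rmult_near (f a b c) (g a b c) e He) as [eta [Heta H]].
  destruct (Hf eta Heta) as [d1 [Hd1 H1]]. destruct (Hg eta Heta) as [d2 [Hd2 H2]].
  exists (Rmin d1 d2). split; [apply Rmin_pos; auto|]. intros a' b' c' Ha Hb Hc.
  pose proof (Rmin_l d1 d2); pose proof (Rmin_r d1 d2).
  apply H; [apply H1|apply H2]; lra.
Qed.

Lemma cont3_const k : cont3 (fun _ _ _ => k) a b c.
Proof. intros e He. exists 1. split; [lra|]. intros. rewrite Rminus_eq_0, Rabs_R0. auto. Qed.
Lemma cont3_proj1 : cont3 (fun x _ _ => x) a b c.
Proof. intros e He. exists e. split; auto. Qed.
Lemma cont3_proj2 : cont3 (fun _ y _ => y) a b c.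
Proof. intros e He. exists e. split; auto. Qed.
Lemma cont3_proj3 : cont3 (fun _ _ z => z) a b c.
Proof. intros e He. exists e. split; auto. Qed.

Lemma cont3_opp f : cont3 f a b c -> cont3 (fun x y z => - f x y z) a b c.
Proof.
  intros H e He. destruct (H e He) as [d [Hd H']]. exists d. split; [auto|]. intros.
  replace (- f a' b' c' - - f a b c) with (- (f a' b' c' - f a b c)) by ring.
  rewrite Rabs_Ropp. auto.
Qed.

Lemma cont3_minus f g : cont3 f a b c -> cont3 g a b c -> cont3 (fun x y z => f x y z - g x y z) a b c.
Proof. intros Hf Hg. apply (cont3_plus f (fun x y z => - g x y z)); auto using cont3_opp. Qed.

Lemma cont3_comp (h : R -> R) f : (forall x, continuous h x) -> cont3 f a b c ->
  cont3 (fun x y z => h (f x y z)) a b c.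
Proof.
  intros Hh Hf e He.
  destruct (proj1 (filterlim_locally h (h (f a b c))) (Hh (f a b c)) (mkposreal e He)) as [d1 H1].
  destruct (Hf d1 (cond_pos d1)) as [d [Hd H]]. exists d. split; [auto|]. intros.
  apply H1. apply H; auto.
Qed.

Lemma cont3_sin f : cont3 f a b c -> cont3 (fun x y z => sin (f x y z)) a b c.
Proof. apply cont3_comp, continuous_sin. Qed.
Lemma cont3_cos f : cont3 f a b c -> cont3 (fun x y z => cos (f x y z)) a b c.
Proof. apply cont3_comp, continuous_cos. Qed.

Lemma cont3_comp_vec (M : R -> R -> R -> vec3) (g : vec3 -> R) :
  (forall i, cont3 (fun x y z => M x y z i) a b c) -> cont_at g (M a b c) ->
  cont3 (fun x y z => g (M x y z)) a b c.
Proof.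
  intros HM Hg e He. destruct (Hg e He) as [d0 [Hd0 H0]].
  destruct (HM I1 (d0/3)) as [d1 [Hd1 H1]]; [lra|].
  destruct (HM I2 (d0/3)) as [d2 [Hd2 H2]]; [lra|].
  destruct (HM I3 (d0/3)) as [d3 [Hd3 H3]]; [lra|].
  exists (Rmin d1 (Rmin d2 d3)). split; [repeat apply Rmin_pos; auto|].
  intros a' b' c' Ha Hb Hc.
  pose proof (Rmin_l d1 (Rmin d2 d3)); pose proof (Rmin_r d1 (Rmin d2 d3));
    pose proof (Rmin_l d2 d3); pose proof (Rmin_r d2 d3).
  apply H0, norm3_lt_of_coords. intros i; destruct i; unfold vsub;
    [apply H1|apply H2|apply H3]; lra.
Qed.

End Cont3Algebra.

Lemma ex_RInt_of_cont3 J u v a b : (forall t, cont3 J u v t) -> ex_RInt (J u v) a b.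
Proof.
  intros H. apply (ex_RInt_continuous (V:=R_CompleteNormedModule)). intros t _.
  apply cont3_continuous_3, H.
Qed.

(* Uniform continuity in the integration variable, from Cousin's lemma. *)
Lemma cont3_uniform_on_segment J u v a b : (forall t, cont3 J u v t) ->
  forall e, 0 < e -> exists d, 0 < d /\ forall u' v' t, a <= t <= b ->
    Rabs (u' - u) < d -> Rabs (v' - v) < d -> Rabs (J u' v' t - J u v t) < e.
Proof.
  intros HJ e He.
  assert (Hex : forall t, exists d, 0 < d /\ forall a' b' c', Rabs (a' - u) < d -> Rabs (b' - v) < d ->
     Rabs (c' - t) < d -> Rabs (J a' b' c' - J u v t) < e / 2)
    by (intros t; apply HJ; lra).
  set (dl := fun t => proj1_sig (constructive_indefinite_description _ (Hex t))).
  assert (Hdl : forall t, 0 < dl t /\ forall a' b' c', Rabs (a' - u) < dl t -> Rabs (b' - v) < dl t ->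
     Rabs (c' - t) < dl t -> Rabs (J a' b' c' - J u v t) < e / 2).
  { intros t. unfold dl. destruct (constructive_indefinite_description _ (Hex t)) as [d Hd]. exact Hd. }
  destruct (compactness_value_1d a b (fun t => mkposreal (dl t) (proj1 (Hdl t)))) as [d0 Hd0].
  exists d0. split; [apply cond_pos|]. intros u' v' t' Ht' Hu' Hv'.
  apply NNPP. intros Hcon. apply (Hd0 t' Ht'). intros [t [Ht [H1 H2]]]. apply Hcon. simpl in H1, H2.
  destruct (Hdl t) as [Hpos Hq].
  assert (A1 : Rabs (J u' v' t' - J u v t) < e / 2) by (apply Hq; lra).
  assert (A2 : Rabs (J u v t' - J u v t) < e / 2)
    by (apply Hq; rewrite ?Rminus_eq_0, ?Rabs_R0; lra).
  replace (J u' v' t' - J u v t') with ((J u' v' t' - J u v t) - (J u v t' - J u v t)) by ring.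
  eapply Rle_lt_trans; [apply Rabs_triang|]. rewrite Rabs_Ropp. lra.
Qed.

Lemma RInt_param_cont2 (J : R -> R -> R -> R) R0 a b : a <= b ->
  (forall u v t, Rabs u < R0 -> cont3 J u v t) ->
  forall u v, Rabs u < R0 -> cont2 (fun u v => RInt (J u v) a b) u v.
Proof.
  intros Hab HJ u v Hu e He.
  set (e' := e / (b - a + 1)).
  assert (He' : 0 < e') by (unfold e'; apply Rdiv_lt_0_compat; lra).
  destruct (cont3_uniform_on_segment J u v a b (fun t => HJ u v t Hu) e' He') as [d0 [Hd0 Hunif]].
  exists (Rmin d0 (R0 - Rabs u)). split; [apply Rmin_pos; lra|].
  intros u' v' Hu' Hv'.
  pose proof (Rmin_l d0 (R0 - Rabs u)); pose proof (Rmin_r d0 (R0 - Rabs u)).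
  assert (HuR : Rabs u' < R0).
  { replace u' with ((u' - u) + u) by ring. eapply Rle_lt_trans; [apply Rabs_triang|]. lra. }
  assert (E1 : ex_RInt (J u' v') a b) by (apply ex_RInt_of_cont3; intros; apply HJ; auto).
  assert (E2 : ex_RInt (J u v) a b) by (apply ex_RInt_of_cont3; intros; apply HJ; auto).
  simpl. replace (RInt (J u' v') a b - RInt (J u v) a b) with (RInt (fun t => J u' v' t - J u v t) a b)
    by exact (RInt_minus (J u' v') (J u v) a b E1 E2).
  eapply Rle_lt_trans.
  - apply abs_RInt_le_const with (M := e'); [exact Hab|exact (ex_RInt_minus _ _ a b E1 E2)|].
    intros t Ht. left. apply Hunif; auto; lra.
  - unfold e'. apply (Rmult_lt_reg_r (b - a + 1)); [lra|].
    replace ((b - a) * (e / (b - a + 1)) * (b - a + 1)) with ((b - a) * e) by (field; lra). nra.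
Qed.

Lemma is_derive_RInt_param_cont (J Jd : R -> R -> R) a b s0 eta : 0 < eta ->
  (forall s t, Rabs (s - s0) < eta -> is_derive (fun z => J z t) s (Jd s t)) ->
  (forall s t, Rabs (s - s0) < eta -> cont2 Jd s t) ->
  (forall s t, Rabs (s - s0) < eta -> cont2 J s t) ->
  is_derive (fun s => RInt (J s) a b) s0 (RInt (Jd s0) a b).
Proof.
  intros Heta HD HcD HcJ.
  assert (Hs0 : Rabs (s0 - s0) < eta) by (rewrite Rminus_eq_0, Rabs_R0; auto).
  rewrite (RInt_ext (Jd s0) (fun t => Derive (fun u => J u t) s0))
    by (intros t _; symmetry; apply is_derive_unique, HD, Hs0).
  apply (is_derive_RInt_param (fun u t => J u t)).
  - exists (mkposreal eta Heta). intros y Hy t _. eexists. apply HD, Hy.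
  - intros t _ eps. destruct (HcD s0 t Hs0 eps (cond_pos eps)) as [d [Hd H]].
    exists (mkposreal (Rmin d eta) (Rmin_pos _ _ Hd Heta)). simpl. intros u v Hu Hv.
    pose proof (Rmin_l d eta); pose proof (Rmin_r d eta).
    cbv beta.
    replace (Derive (fun z : R => J z v) u) with (Jd u v)
      by (symmetry; apply is_derive_unique, HD; lra).
    replace (Derive (fun z : R => J z t) s0) with (Jd s0 t)
      by (symmetry; apply is_derive_unique, HD, Hs0).
    apply H; lra.
  - exists (mkposreal eta Heta). intros y Hy. apply (ex_RInt_continuous (V:=R_CompleteNormedModule)).
    intros z _. apply cont2_continuous_2, HcJ, Hy.
Qed.

(* Integrands carry the area element [sin theta] themselves:
   [sph_avg g = / (4 * PI) * sphere_int (fun _ phi theta => g (sph theta phi) * sin theta) rho]. *)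
Definition sphere_int (K : R -> R -> R -> R) (rho : R) : R :=
  RInt (fun phi => RInt (fun theta => K rho phi theta) 0 PI) 0 (2 * PI).

Lemma sphere_int_ext K1 K2 rho : (forall phi theta, K1 rho phi theta = K2 rho phi theta) ->
  sphere_int K1 rho = sphere_int K2 rho.
Proof. intros H. unfold sphere_int. apply RInt_ext. intros. apply RInt_ext. intros. apply H. Qed.

Lemma PI_ge0 : 0 <= PI. Proof. pose proof PI_RGT_0; lra. Qed.
Lemma twoPI_ge0 : 0 <= 2 * PI. Proof. pose proof PI_RGT_0; lra. Qed.

Section SphereIntegral.
Variable R0 : R.

Definition jointly_cont (K : R -> R -> R -> R) := forall u v t, Rabs u < R0 -> cont3 K u v t.

Lemma jointly_cont_plus K1 K2 : jointly_cont K1 -> jointly_cont K2 ->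
  jointly_cont (fun a b c => K1 a b c + K2 a b c).
Proof. intros H1 H2 a b c H. apply cont3_plus; auto. Qed.

Lemma jointly_cont_scal K k : jointly_cont K -> jointly_cont (fun a b c => k * K a b c).
Proof. intros H a b c Ha. apply cont3_mult; auto using cont3_const. Qed.

Lemma sphere_int_inner_cont2 K : jointly_cont K ->
  forall u v, Rabs u < R0 -> cont2 (fun u v => RInt (K u v) 0 PI) u v.
Proof. intros H. apply RInt_param_cont2; [apply PI_ge0|exact H]. Qed.

Lemma sphere_int_inner_ex K rho phi : jointly_cont K -> Rabs rho < R0 -> ex_RInt (K rho phi) 0 PI.
Proof. intros H Hr. apply ex_RInt_of_cont3. intros; apply H, Hr. Qed.

Lemma sphere_int_outer_ex K rho : jointly_cont K -> Rabs rho < R0 ->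
  ex_RInt (fun phi => RInt (K rho phi) 0 PI) 0 (2 * PI).
Proof.
  intros H Hr. apply (ex_RInt_continuous (V:=R_CompleteNormedModule)). intros z _.
  apply (cont2_continuous_2 (fun u v => RInt (K u v) 0 PI)), sphere_int_inner_cont2; auto.
Qed.

Lemma sphere_int_continuous K rho : jointly_cont K -> Rabs rho < R0 -> continuous (sphere_int K) rho.
Proof.
  intros H Hr. unfold sphere_int.
  apply (cont2_continuous_1 (fun u v => RInt (fun phi => RInt (K u phi) 0 PI) 0 (2 * PI)) rho 0).
  apply (RInt_param_cont2 (fun x _ z => RInt (K x z) 0 PI) R0 0 (2 * PI) twoPI_ge0); auto.
  intros u v t Hu. apply cont3_of_cont2, sphere_int_inner_cont2; auto.
Qed.

Lemma sphere_int_plus K1 K2 rho : jointly_cont K1 -> jointly_cont K2 -> Rabs rho < R0 ->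
  sphere_int (fun r p t => K1 r p t + K2 r p t) rho = sphere_int K1 rho + sphere_int K2 rho.
Proof.
  intros H1 H2 Hr. unfold sphere_int.
  rewrite <- (RInt_plus (V:=R_CompleteNormedModule)) by (apply sphere_int_outer_ex; auto).
  apply RInt_ext. intros x _. apply (RInt_plus (V:=R_CompleteNormedModule)); apply sphere_int_inner_ex; auto.
Qed.

Lemma sphere_int_scal K c rho : jointly_cont K -> Rabs rho < R0 ->
  sphere_int (fun r p t => c * K r p t) rho = c * sphere_int K rho.
Proof.
  intros H Hr. unfold sphere_int.
  rewrite <- (RInt_scal (V:=R_CompleteNormedModule)) by (apply sphere_int_outer_ex; auto).
  apply RInt_ext. intros x _. apply (RInt_scal (V:=R_CompleteNormedModule)); apply sphere_int_inner_ex; auto.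
Qed.

Lemma Rabs_lt_shift s s0 eta : Rabs (s - s0) < eta - Rabs s0 -> Rabs s < eta.
Proof. intros Hs. replace s with ((s - s0) + s0) by ring. eapply Rle_lt_trans; [apply Rabs_triang|]. lra. Qed.

Lemma is_derive_sphere_int K Kd rho : jointly_cont K -> jointly_cont Kd -> Rabs rho < R0 ->
  (forall r p t, Rabs r < R0 -> is_derive (fun z => K z p t) r (Kd r p t)) ->
  is_derive (sphere_int K) rho (sphere_int Kd rho).
Proof.
  intros HK HKd Hr HD. unfold sphere_int.
  apply (is_derive_RInt_param_cont (fun s phi => RInt (K s phi) 0 PI) (fun s phi => RInt (Kd s phi) 0 PI)
    0 (2 * PI) rho (R0 - Rabs rho)); [lra| | |].
  - intros s t Hs. apply Rabs_lt_shift in Hs.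
    apply (is_derive_RInt_param_cont (fun z th => K z t th) (fun z th => Kd z t th) 0 PI s (R0 - Rabs s));
      [lra| | |]; intros s' t' Hs'; apply Rabs_lt_shift in Hs'.
    + apply HD, Hs'.
    + apply cont2_of_cont3, HKd, Hs'.
    + apply cont2_of_cont3, HK, Hs'.
  - intros s t Hs. apply Rabs_lt_shift in Hs. apply sphere_int_inner_cont2; auto.
  - intros s t Hs. apply Rabs_lt_shift in Hs. apply sphere_int_inner_cont2; auto.
Qed.

End SphereIntegral.

Definition sphere_pt (c : vec3) (r phi theta : R) : vec3 := vadd c (vscal r (sph theta phi)).
Definition e_theta (theta phi : R) : vec3 := mkv (cos theta * cos phi) (cos theta * sin phi) (- sin theta).
Definition e_phi (theta phi : R) : vec3 := mkv (- sin phi) (cos phi) 0.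
Definition e_phi_dphi (theta phi : R) : vec3 := mkv (- cos phi) (- sin phi) 0.

Lemma norm3_sph theta phi : norm3 (sph theta phi) = 1.
Proof.
  unfold norm3, dot, sum3, sph. rewrite <- sqrt_1. f_equal.
  pose proof (sin2_cos2 theta). pose proof (sin2_cos2 phi). unfold Rsqr in *. nra.
Qed.

Lemma sphere_pt_in_ball c r phi theta R0 : Rabs r < R0 -> norm3 (vsub (sphere_pt c r phi theta) c) < R0.
Proof.
  intros H. replace (vsub (sphere_pt c r phi theta) c) with (vscal r (sph theta phi))
    by (apply vec3_ext; intros i; unfold sphere_pt, vsub, vadd, vscal; ring).
  rewrite norm3_scal, norm3_sph. lra.
Qed.

Lemma is_derive_sphere_pt_theta c r phi theta i :
  is_derive (fun s => sphere_pt c r phi s i) theta (r * e_theta theta phi i).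
Proof. destruct i; unfold sphere_pt, vadd, vscal, sph, e_theta, mkv; auto_derive; auto; ring. Qed.
Lemma is_derive_sphere_pt_phi c r phi theta i :
  is_derive (fun s => sphere_pt c r s theta i) phi (r * (sin theta * e_phi theta phi i)).
Proof. destruct i; unfold sphere_pt, vadd, vscal, sph, e_phi, mkv; auto_derive; auto; ring. Qed.
Lemma is_derive_sphere_pt_r c r phi theta i :
  is_derive (fun s => sphere_pt c s phi theta i) r (sph theta phi i).
Proof. destruct i; unfold sphere_pt, vadd, vscal, sph; auto_derive; auto; ring. Qed.
Lemma is_derive_e_theta phi theta i : is_derive (fun s => e_theta s phi i) theta (- sph theta phi i).
Proof. destruct i; unfold sph, e_theta, mkv; auto_derive; auto; ring. Qed.
Lemma is_derive_e_phi phi theta i : is_derive (fun s => e_phi theta s i) phi (e_phi_dphi theta phi i).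
Proof. destruct i; unfold e_phi_dphi, e_phi, mkv; auto_derive; auto; ring. Qed.

Lemma sph_2PI theta : sph theta (2 * PI) = sph theta 0.
Proof. apply vec3_ext; intros i; destruct i; unfold sph; rewrite ?cos_2PI, ?sin_2PI, ?cos_0, ?sin_0; auto. Qed.
Lemma e_phi_2PI theta : e_phi theta (2 * PI) = e_phi theta 0.
Proof. apply vec3_ext; intros i; destruct i; unfold e_phi, mkv; rewrite ?cos_2PI, ?sin_2PI, ?cos_0, ?sin_0; auto. Qed.

Ltac cont3_step := first [ apply cont3_plus | apply cont3_minus | apply cont3_mult | apply cont3_opp
  | apply cont3_sin | apply cont3_cos | apply cont3_const
  | apply cont3_proj1 | apply cont3_proj2 | apply cont3_proj3
  | match goal with |- cont3 (fun x y z => ?g (@?M x y z)) ?a ?b ?c => apply (cont3_comp_vec a b c M g) end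
  | match goal with |- cont3 (fun x y z => ?U (@?M x y z) ?i) ?a ?b ?c =>
      apply (cont3_comp_vec a b c M (fun w => U w i)) end
  | match goal with |- forall i : idx, _ =>
      intros i; destruct i; cbv beta; unfold sphere_pt, vadd, vscal, vsub, mkv, sph; simpl end ].
Ltac cont3_auto := repeat cont3_step.

Section TangentialDivergence.
Variables (O : vec3 -> Prop) (c : vec3) (R0 : R) (V : idx -> vec3 -> R) (DV : idx -> idx -> vec3 -> R).
Hypothesis Hball : forall z, norm3 (vsub z c) < R0 -> O z.
Hypothesis HV : forall i, C1_on O (V i) (DV i).

(* Times [sin theta], this is [r] times the surface divergence, on the sphere of radius [r]
   around [c], of the tangential part of [V]. *)
Definition tangential_div_integrand (r phi theta : R) :=
  (r * (sum3 (fun i => DV i i (sphere_pt c r phi theta))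
        - sum3 (fun i => sum3 (fun j => sph theta phi i * sph theta phi j * DV i j (sphere_pt c r phi theta))))
   - 2 * sum3 (fun i => sph theta phi i * V i (sphere_pt c r phi theta))) * sin theta.

Variable r : R.
Hypothesis Hr : Rabs r < R0.

Let in_O phi theta : O (sphere_pt c r phi theta).
Proof. apply Hball, sphere_pt_in_ball, Hr. Qed.
Let cont_V i phi theta : cont_at (V i) (sphere_pt c r phi theta).
Proof. exact (proj1 (HV i) _ (in_O phi theta)). Qed.
Let cont_DV i j phi theta : cont_at (DV i j) (sphere_pt c r phi theta).
Proof. exact (proj1 (proj2 (HV i)) j _ (in_O phi theta)). Qed.

Let F i phi theta := V i (sphere_pt c r phi theta).
Let dF_theta i phi theta :=
  sum3 (fun j => (r * e_theta theta phi j) * DV i j (sphere_pt c r phi theta)).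
Let dF_phi i phi theta :=
  sum3 (fun j => (r * (sin theta * e_phi theta phi j)) * DV i j (sphere_pt c r phi theta)).

Let P phi theta := sin theta * sum3 (fun i => e_theta theta phi i * F i phi theta).
Let dP phi theta := cos theta * sum3 (fun i => e_theta theta phi i * F i phi theta)
   + sin theta * sum3 (fun i => - sph theta phi i * F i phi theta + e_theta theta phi i * dF_theta i phi theta).
Let Q phi theta := sum3 (fun i => e_phi theta phi i * F i phi theta).
Let dQ phi theta := sum3 (fun i => e_phi_dphi theta phi i * F i phi theta + e_phi theta phi i * dF_phi i phi theta).

Let is_derive_P phi theta : is_derive (P phi) theta (dP phi theta).
Proof.
  apply is_derive_Rmult; [apply is_derive_sin|].
  apply (is_derive_sum3 (fun i s => e_theta s phi i * F i phi s)). intros i.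
  apply (is_derive_Rmult (fun s => e_theta s phi i) (fun s => F i phi s)); [apply is_derive_e_theta|].
  apply (proj2 (proj2 (HV i)) (fun s => sphere_pt c r phi s) (fun j => r * e_theta theta phi j)).
  - apply in_O.
  - intros j. apply is_derive_sphere_pt_theta.
Qed.

Let is_derive_Q phi theta : is_derive (fun s => Q s theta) phi (dQ phi theta).
Proof.
  apply (is_derive_sum3 (fun i s => e_phi theta s i * F i s theta)). intros i.
  apply (is_derive_Rmult (fun s => e_phi theta s i) (fun s => F i s theta)); [apply is_derive_e_phi|].
  apply (proj2 (proj2 (HV i)) (fun s => sphere_pt c r s theta) (fun j => r * (sin theta * e_phi theta phi j))).
  - apply in_O.
  - intros j. apply is_derive_sphere_pt_phi.
Qed.

Let integrand_eq phi theta : tangential_div_integrand r phi theta = dP phi theta + dQ phi theta.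
Proof.
  unfold tangential_div_integrand, dP, dQ, dF_theta, dF_phi, F, sum3, e_theta, e_phi, e_phi_dphi, sph, mkv.
  simpl. pose proof (sin2_cos2 theta) as H1. pose proof (sin2_cos2 phi) as H2. unfold Rsqr in *.
  set (y := sphere_pt c r phi theta).
  set (st := sin theta) in *. set (ct := cos theta) in *. set (sp := sin phi) in *. set (cp := cos phi) in *.
  nsatz.
Qed.

Ltac cont_field := cbv beta; first [apply cont_V | apply cont_DV].

Let cont3_dP u v t : cont3 (fun x _ z => dP x z) u v t.
Proof. unfold dP, dF_theta, F, sum3, e_theta, sph, mkv. simpl. cont3_auto; cont_field. Qed.
Let cont3_dQ u v t : cont3 (fun x _ z => dQ x z) u v t.
Proof. unfold dQ, dF_phi, F, sum3, e_phi, e_phi_dphi, sph, mkv. simpl. cont3_auto; cont_field. Qed.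
Let cont3_Q u v t : cont3 (fun x _ z => Q x z) u v t.
Proof. unfold Q, F, sum3, e_phi, mkv. simpl. cont3_auto; cont_field. Qed.

(* The integrand is [d/dtheta P + d/dphi Q]: [P] carries the factor [sin theta], which
   vanishes at both poles, and [Q] is [2 PI]-periodic in [phi]. *)
Lemma sphere_int_tangential_div : sphere_int tangential_div_integrand r = 0.
Proof.
  assert (Htheta : forall phi, RInt (dP phi) 0 PI = 0).
  { intros phi. apply is_RInt_unique.
    replace 0 with (minus (P phi PI) (P phi 0)) at 2 by (unfold P; rewrite sin_PI, sin_0; Req; ring).
    apply (is_RInt_derive (V:=R_CompleteNormedModule)); [intros; apply is_derive_P|].
    intros t _. apply (cont3_continuous_3 (fun x _ z => dP x z) phi 0), cont3_dP. }
  unfold sphere_int.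
  rewrite (RInt_ext _ (fun phi => RInt (dQ phi) 0 PI)).
  2: { intros phi _. rewrite (RInt_ext _ (fun theta => dP phi theta + dQ phi theta))
         by (intros; apply integrand_eq).
       rewrite (RInt_plus (V:=R_CompleteNormedModule)), Htheta.
       - Req. ring.
       - apply (ex_RInt_of_cont3 (fun x _ z => dP x z) phi 0). intros; apply cont3_dP.
       - apply (ex_RInt_of_cont3 (fun x _ z => dQ x z) phi 0). intros; apply cont3_dQ. }
  set (Phi := fun phi => RInt (Q phi) 0 PI).
  assert (HPhi : forall phi, is_derive Phi phi (RInt (dQ phi) 0 PI)).
  { intros phi. apply (is_derive_RInt_param_cont Q dQ 0 PI phi 1 Rlt_0_1); intros s t _.
    - apply is_derive_Q.
    - apply (cont2_of_cont3 (fun x _ z => dQ x z) s 0 t), cont3_dQ.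
    - apply (cont2_of_cont3 (fun x _ z => Q x z) s 0 t), cont3_Q. }
  assert (Hperiodic : minus (Phi (2 * PI)) (Phi 0) = 0).
  { unfold Phi. rewrite (RInt_ext (Q (2 * PI)) (Q 0)).
    - Req. ring.
    - intros t _. unfold Q, F, sphere_pt. rewrite sph_2PI, e_phi_2PI. reflexivity. }
  assert (HFTC : is_RInt (fun phi => RInt (dQ phi) 0 PI) 0 (2 * PI) (minus (Phi (2 * PI)) (Phi 0))).
  { apply (is_RInt_derive (V:=R_CompleteNormedModule)); [intros; apply HPhi|].
    intros phi _.
    apply (cont2_continuous_1 (fun u v => RInt ((fun x _ z => dQ x z) u v) 0 PI) phi 0).
    apply (RInt_param_cont2 (fun x _ z => dQ x z) (Rabs phi + 1) 0 PI PI_ge0); [|lra].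
    intros; apply cont3_dQ. }
  rewrite Hperiodic in HFTC. apply is_RInt_unique, HFTC.
Qed.

End TangentialDivergence.

Lemma eq_of_is_derive_zero (B dB : R -> R) R0 rho : Rabs rho < R0 ->
  (forall s, Rabs s < R0 -> is_derive B s (dB s)) -> (forall s, Rabs s < R0 -> dB s = 0) -> B rho = B 0.
Proof.
  intros Hr HB Hd.
  assert (Hin : forall s, Rmin 0 rho <= s <= Rmax 0 rho -> Rabs s < R0)
    by (intros s Hs; apply Rabs_le_between in Hs; lra).
  destruct (MVT_gen B 0 rho dB) as [c0 [Hc Heq]].
  - intros s Hs. apply HB, Hin. lra.
  - intros s Hs. apply continuity_pt_filterlim.
    apply (ex_derive_continuous (K:=R_AbsRing) (V:=R_NormedModule) B). eexists. apply HB, Hin, Hs.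
  - rewrite Hd in Heq by (apply Hin, Hc). lra.
Qed.

Section Flux.
Variables (O : vec3 -> Prop) (c : vec3) (R0 : R) (V : idx -> vec3 -> R) (DV : idx -> idx -> vec3 -> R).
Hypothesis Hball : forall z, norm3 (vsub z c) < R0 -> O z.
Hypothesis HV : forall i, C1_on O (V i) (DV i).

Definition flux_integrand (r phi theta : R) :=
  sum3 (fun i => sph theta phi i * V i (sphere_pt c r phi theta)) * sin theta.
Definition flux_integrand_dr (r phi theta : R) :=
  sum3 (fun i => sph theta phi i * sum3 (fun j => sph theta phi j * DV i j (sphere_pt c r phi theta)))
  * sin theta.

Let cont_V i u v t : Rabs u < R0 -> cont_at (V i) (sphere_pt c u v t).
Proof. intros H. exact (proj1 (HV i) _ (Hball _ (sphere_pt_in_ball c u v t R0 H))). Qed.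
Let cont_DV i j u v t : Rabs u < R0 -> cont_at (DV i j) (sphere_pt c u v t).
Proof. intros H. exact (proj1 (proj2 (HV i)) j _ (Hball _ (sphere_pt_in_ball c u v t R0 H))). Qed.

Lemma jointly_cont_flux_integrand : jointly_cont R0 flux_integrand.
Proof.
  intros u v t Hu. unfold flux_integrand, sum3. simpl.
  cont3_auto; cbv beta; first [apply cont_V | apply cont_DV]; auto.
Qed.

Lemma jointly_cont_flux_integrand_dr : jointly_cont R0 flux_integrand_dr.
Proof.
  intros u v t Hu. unfold flux_integrand_dr, sum3. simpl.
  cont3_auto; cbv beta; first [apply cont_V | apply cont_DV]; auto.
Qed.

Lemma is_derive_flux_integrand r phi theta : Rabs r < R0 ->
  is_derive (fun z => flux_integrand z phi theta) r (flux_integrand_dr r phi theta).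
Proof.
  intros Hr. apply is_derive_Rmult_r.
  apply (is_derive_sum3 (fun i z => sph theta phi i * V i (sphere_pt c z phi theta))). intros i.
  apply is_derive_Rmult_l. eapply is_derive_eq.
  - apply (proj2 (proj2 (HV i)) (fun z => sphere_pt c z phi theta) (sph theta phi)).
    + apply Hball, sphere_pt_in_ball, Hr.
    + intros j. apply is_derive_sphere_pt_r.
  - Req. unfold sum3. ring.
Qed.

Hypothesis Hdiv : forall y, O y -> sum3 (fun i => DV i i y) = 0.

(* For a divergence-free field the tangential divergence identity reads
   [r Phi'(r) + 2 Phi(r) = 0] for the flux [Phi], i.e. [(r^2 Phi)' = 0]. *)
Lemma flux_divfree_zero rho : Rabs rho < R0 -> rho <> 0 -> sphere_int flux_integrand rho = 0.
Proof.
  intros Hr Hr0.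
  assert (Hrel : forall s, Rabs s < R0 ->
      s * sphere_int flux_integrand_dr s + 2 * sphere_int flux_integrand s = 0).
  { intros s Hs. pose proof (sphere_int_tangential_div O c R0 V DV Hball HV s Hs) as H.
    rewrite (sphere_int_ext _ (fun r p t => (- s) * flux_integrand_dr r p t + (-2) * flux_integrand r p t)) in H.
    2: { intros phi theta. unfold tangential_div_integrand, flux_integrand_dr, flux_integrand.
         rewrite Hdiv by (apply Hball, sphere_pt_in_ball, Hs). unfold sum3. ring. }
    rewrite sphere_int_plus with (R0 := R0), !sphere_int_scal with (R0 := R0) in H;
      auto using jointly_cont_scal, jointly_cont_flux_integrand, jointly_cont_flux_integrand_dr.
    lra. }
  set (B := fun s => s * s * sphere_int flux_integrand s).
  assert (HB : B rho = B 0).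
  { apply (eq_of_is_derive_zero B
      (fun s => (s + s) * sphere_int flux_integrand s + s * s * sphere_int flux_integrand_dr s) R0);
      auto; intros s Hs.
    - apply (is_derive_Rmult (fun z => z * z) (sphere_int flux_integrand)).
      + eapply is_derive_eq; [apply (is_derive_Rmult (fun z => z) (fun z => z)); apply is_derive_id|].
        Req. ring.
      + apply (is_derive_sphere_int R0);
          auto using jointly_cont_flux_integrand, jointly_cont_flux_integrand_dr, is_derive_flux_integrand.
    - replace ((s + s) * sphere_int flux_integrand s + s * s * sphere_int flux_integrand_dr s)
        with (s * (s * sphere_int flux_integrand_dr s + 2 * sphere_int flux_integrand s)) by ring.
      rewrite Hrel by exact Hs. ring. }
  unfold B in HB. rewrite !Rmult_0_l in HB.
  apply (Rmult_eq_reg_l (rho * rho)); [lra|]. apply Rmult_integral_contrapositive; auto.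
Qed.

End Flux.

Lemma ball_shift_subset (O : vec3 -> Prop) c R0 w s :
  (forall z, norm3 (vsub z c) < R0 -> O z) ->
  forall z, norm3 (vsub z (vadd c (vscal s w))) < R0 - Rabs s * norm3 w -> O z.
Proof.
  intros Hball z Hz. apply Hball.
  replace (vsub z c) with (vadd (vsub z (vadd c (vscal s w))) (vscal s w))
    by (apply vec3_ext; intros i; unfold vsub, vadd, vscal; ring).
  eapply Rle_lt_trans; [apply norm3_triangle|]. rewrite norm3_scal. lra.
Qed.

Lemma derive_eq_0_of_locally_zero (F : R -> R) t l eta : 0 < eta ->
  (forall s, Rabs (s - t) < eta -> F s = 0) -> is_derive F t l -> l = 0.
Proof.
  intros Heta HF HD.
  assert (H0 : is_derive (fun _ => 0) t l).
  { apply (is_derive_ext_loc F); [|exact HD]. exists (mkposreal eta Heta). intros s Hs. apply HF, Hs. }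
  rewrite <- (is_derive_unique _ _ _ H0). apply Derive_const.
Qed.

Section CentreShift.
Variables (O : vec3 -> Prop) (c : vec3) (R0 : R) (V : idx -> vec3 -> R) (DV : idx -> idx -> vec3 -> R).
Variable w : vec3.
Hypothesis Hball : forall z, norm3 (vsub z c) < R0 -> O z.
Hypothesis HV : forall i, C1_on O (V i) (DV i).
Hypothesis Hdiv : forall y, O y -> sum3 (fun i => DV i i y) = 0.
Variable rho : R.
Hypothesis Hrho : 0 < rho < R0.

Let cs s := vadd c (vscal s w).
Let eta := (R0 - rho) / (norm3 w + 1).

Let eta_pos : 0 < eta.
Proof. unfold eta. pose proof (norm3_ge0 w). apply Rdiv_lt_0_compat; lra. Qed.

Let shifted_radius s : Rabs s < eta -> rho < R0 - Rabs s * norm3 w.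
Proof.
  intros Hs. pose proof (norm3_ge0 w). pose proof (Rabs_pos s).
  enough (Rabs s * norm3 w < R0 - rho) by lra.
  apply Rle_lt_trans with (Rabs s * (norm3 w + 1)); [nra|].
  replace (R0 - rho) with (eta * (norm3 w + 1)) by (unfold eta; field; lra).
  apply Rmult_lt_compat_r; lra.
Qed.

Let shifted_sphere_in s phi theta : Rabs s < eta -> O (sphere_pt (cs s) rho phi theta).
Proof.
  intros Hs. apply (ball_shift_subset O c R0 w s Hball), sphere_pt_in_ball.
  pose proof (shifted_radius s Hs). rewrite Rabs_right; lra.
Qed.

Let jointly_cont_shifted_flux K : (forall i y, O y -> cont_at (K i) y) ->
  jointly_cont eta (fun s => flux_integrand (cs s) K rho).
Proof.
  intros HK a b c' Ha. unfold flux_integrand, sum3, cs. simpl.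
  cont3_auto; apply HK, shifted_sphere_in, Ha.
Qed.

(* Moving the centre of the sphere along [w] keeps the flux of [V] zero; differentiating in the
   position of the centre gives the flux of the derivative of [V] in direction [w]. *)
Lemma flux_directional_derivative_zero :
  sphere_int (flux_integrand c (fun i y => sum3 (fun j => w j * DV i j y))) rho = 0.
Proof.
  set (Ks := fun s => flux_integrand (cs s) V rho).
  set (Kds := fun s => flux_integrand (cs s) (fun i y => sum3 (fun j => w j * DV i j y)) rho).
  assert (HD : forall s phi theta, Rabs s < eta ->
      is_derive (fun z => Ks z phi theta) s (Kds s phi theta)).
  { intros s phi theta Hs. apply is_derive_Rmult_r.
    apply (is_derive_sum3 (fun i z => sph theta phi i * V i (sphere_pt (cs z) rho phi theta))). intros i.
    apply is_derive_Rmult_l.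
    apply (proj2 (proj2 (HV i)) (fun z => sphere_pt (cs z) rho phi theta) w); [apply shifted_sphere_in, Hs|].
    intros j. unfold sphere_pt, cs, vadd, vscal. auto_derive; auto. ring. }
  assert (HA : is_derive (sphere_int Ks) 0 (sphere_int Kds 0)).
  { apply is_derive_sphere_int with (R0 := eta); auto; [| |rewrite Rabs_R0; exact eta_pos];
      apply jointly_cont_shifted_flux; intros i y Hy.
    - exact (proj1 (HV i) y Hy).
    - unfold sum3. repeat apply cont_at_plus; apply cont_at_mult; auto using cont_at_const;
        exact (proj1 (proj2 (HV i)) _ y Hy). }
  replace c with (cs 0) by (apply vec3_ext; intros i; unfold cs, vadd, vscal; ring).
  apply (derive_eq_0_of_locally_zero (sphere_int Ks) 0 _ eta eta_pos); [|exact HA].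
  intros s Hs. rewrite Rminus_0_r in Hs. change (sphere_int (flux_integrand (cs s) V) rho = 0).
  apply (flux_divfree_zero O (cs s) (R0 - Rabs s * norm3 w) V DV (ball_shift_subset O c R0 w s Hball) HV Hdiv);
    [|lra].
  pose proof (shifted_radius s Hs). rewrite Rabs_right; lra.
Qed.

End CentreShift.

Lemma RInt_sin_0_PI : RInt sin 0 PI = 2.
Proof.
  apply is_RInt_unique.
  replace 2 with (minus ((fun t => - cos t) PI) ((fun t => - cos t) 0))
    by (simpl; rewrite cos_PI, cos_0; Req; ring).
  apply (is_RInt_derive (V:=R_CompleteNormedModule) (fun t => - cos t) sin).
  - intros; auto_derive; auto; ring.
  - intros; apply continuous_sin.
Qed.

Lemma sphere_int_sin rho : sphere_int (fun _ _ theta => sin theta) rho = 4 * PI.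
Proof.
  unfold sphere_int. rewrite (RInt_ext _ (fun _ => 2)) by (intros; apply RInt_sin_0_PI).
  rewrite RInt_const. Req. ring.
Qed.

(* The tangential divergence identity for the linear field [y |-> (a.y) a]. *)
Lemma sphere_int_sq_dot (a : vec3) rho :
  sphere_int (fun _ phi theta => (dot (sph theta phi) a) ^ 2 * sin theta) rho = dot a a * (4 * PI) / 3.
Proof.
  set (V := fun i (y : vec3) => a i * sum3 (fun j => a j * y j)).
  set (DV := fun i j (_ : vec3) => a i * a j).
  assert (HV : forall i, C1_on (fun _ => True) (V i) (DV i)).
  { intros i. apply C1_on_ext with (Df := fun l y => 0 * sum3 (fun j => a j * y j)
        + a i * sum3 (fun j => 0 * y j + a j * ebasis l j)).
    - intros y _. exists 1. split; [lra|auto].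
    - apply C1_on_mult; [apply C1_on_const|].
      apply (C1_on_sum3 _ (fun j y => a j * y j)). intros j.
      apply C1_on_mult; [apply C1_on_const|apply C1_on_coord].
    - intros l y _. unfold DV. destruct i, l; unfold sum3, ebasis; simpl; ring. }
  pose proof (sphere_int_tangential_div (fun _ => True) (fun _ => 0) 2 V DV (fun _ _ => I) HV 1
    ltac:(rewrite Rabs_R1; lra)) as H.
  rewrite (sphere_int_ext _ (fun r phi theta =>
      dot a a * sin theta + (-3) * ((dot (sph theta phi) a) ^ 2 * sin theta))) in H.
  2: { intros phi theta. unfold tangential_div_integrand, V, DV, sphere_pt, dot, sum3, vadd, vscal, sph.
       simpl. pose proof (sin2_cos2 theta) as H1. pose proof (sin2_cos2 phi) as H2. unfold Rsqr in *.
       nsatz. }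
  assert (Hcont : forall K, (forall u v t, cont3 K u v t) -> jointly_cont 2 K) by (intros K HK u v t _; auto).
  rewrite sphere_int_plus with (R0 := 2), !sphere_int_scal with (R0 := 2), sphere_int_sin in H.
  - change (sphere_int (fun _ phi theta => (dot (sph theta phi) a) ^ 2 * sin theta) rho)
      with (sphere_int (fun _ phi theta => (dot (sph theta phi) a) ^ 2 * sin theta) 1). lra.
  all: try (rewrite Rabs_R1; lra).
  all: try apply jointly_cont_scal.
  all: apply Hcont; intros; unfold dot, sum3, sph; simpl; cont3_auto.
Qed.

Section SegmentExit.
Variables (Omega : vec3 -> Prop) (x z : vec3).
Hypothesis Hop : open3 Omega.
Hypothesis Hx : Omega x.
Hypothesis Hz : ~ Omega z.

Let seg t := vadd x (vscal t (vsub z x)).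

Let seg_close s t e : 0 < e -> Rabs (s - t) <= e / (2 * (norm3 (vsub z x) + 1)) ->
  norm3 (vsub (seg s) (seg t)) < e.
Proof.
  intros He Hst. set (N := norm3 (vsub z x)). assert (HN : 0 <= N) by apply norm3_ge0.
  replace (vsub (seg s) (seg t)) with (vscal (s - t) (vsub z x))
    by (apply vec3_ext; intros i; unfold seg, vsub, vadd, vscal; ring).
  rewrite norm3_scal. fold N.
  apply Rle_lt_trans with (e / (2 * (N + 1)) * N); [apply Rmult_le_compat_r; auto|].
  apply (Rmult_lt_reg_r (2 * (N + 1))); [lra|].
  replace (e / (2 * (N + 1)) * N * (2 * (N + 1))) with (e * N) by (field; lra). nra.
Qed.

Let E t := 0 <= t <= 1 /\ forall s, 0 <= s <= t -> Omega (seg s).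

(* The supremum of the times [t] such that [seg] stays in [Omega] on [[0, t]] is a boundary point. *)
Lemma exists_boundary_on_segment : exists m, 0 < m <= 1 /\ boundary Omega (vadd x (vscal m (vsub z x))).
Proof.
  assert (Hseg0 : seg 0 = x) by (apply vec3_ext; intros i; unfold seg, vadd, vscal; ring).
  assert (Hseg1 : seg 1 = z) by (apply vec3_ext; intros i; unfold seg, vadd, vscal, vsub; ring).
  assert (HE0 : E 0) by (split; [lra|]; intros s Hs; replace s with 0 by lra; rewrite Hseg0; auto).
  destruct (completeness E) as [m [Hub Hlub]]; [exists 1; intros t [Ht _]; lra|exists 0; auto|].
  assert (Hm : 0 <= m <= 1) by (split; [apply Hub, HE0|apply Hlub; intros t [Ht _]; lra]).
  assert (Hbelow : forall s, 0 <= s < m -> Omega (seg s)).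
  { intros s Hs. apply NNPP. intros Hn. enough (m <= s) by lra.
    apply Hlub. intros t [Ht Ht']. destruct (Rle_lt_dec t s); auto.
    exfalso. apply Hn, Ht'. lra. }
  set (eps e := e / (2 * (norm3 (vsub z x) + 1))).
  assert (Heps : forall e, 0 < e -> 0 < eps e)
    by (intros e He; apply Rdiv_lt_0_compat; pose proof (norm3_ge0 (vsub z x)); lra).
  assert (Hout : ~ Omega (seg m)).
  { intros Hin. destruct (Hop _ Hin) as [e [He Hball]].
    destruct (Req_dec m 1) as [->|Hm1]; [rewrite Hseg1 in Hin; auto|].
    set (t := Rmin 1 (m + eps e)).
    assert (Ht : m < t <= m + eps e) by (split; [apply Rmin_glb_lt|apply Rmin_r]; pose proof (Heps e He); lra).
    enough (E t) by (pose proof (Hub t H); lra).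
    split; [split; [lra|apply Rmin_l]|]. intros s Hs.
    destruct (Rlt_le_dec s m); [apply Hbelow; lra|].
    apply Hball, seg_close; [exact He|]. rewrite Rabs_right; unfold eps in *; lra. }
  assert (Hmpos : 0 < m).
  { destruct (Req_dec m 0) as [H0|H0]; [|lra]. rewrite H0, Hseg0 in Hout. contradiction. }
  exists m. split; [lra|]. split.
  - intros e He. set (s := Rmax 0 (m - eps e)).
    assert (Hs : 0 <= s < m /\ m - eps e <= s)
      by (pose proof (Heps e He); unfold s; repeat split; [apply Rmax_l|apply Rmax_lub_lt; lra|apply Rmax_r]).
    exists (seg s). split; [apply Hbelow; lra|].
    apply seg_close; [exact He|]. rewrite Rabs_left1; unfold eps in *; lra.
  - intros [e [He Hin]]. apply Hout, Hin. rewrite norm3_sub_diag. exact He.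
Qed.

End SegmentExit.

Lemma ball_subset_of_boundary_dist (Omega : vec3 -> Prop) x d :
  open3 Omega -> Omega x -> (forall z, boundary Omega z -> d <= norm3 (vsub z x)) ->
  forall z, norm3 (vsub z x) < d -> Omega z.
Proof.
  intros Hop Hx Hb z Hz. apply NNPP. intros Hnz.
  destruct (exists_boundary_on_segment Omega x z Hop Hx Hnz) as [m [Hm Hbd]].
  pose proof (Hb _ Hbd) as Hd.
  replace (vsub (vadd x (vscal m (vsub z x))) x) with (vscal m (vsub z x)) in Hd
    by (apply vec3_ext; intros i; unfold vsub, vadd, vscal; ring).
  rewrite norm3_scal, Rabs_right in Hd by lra.
  pose proof (norm3_ge0 (vsub z x)). nra.
Qed.

Section PressureMean.
Variables (Omega : vec3 -> Prop) (x : vec3) (d : R) (u : vec3 -> vec3) (v : vec3) (p : vec3 -> R).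
Hypothesis Hball : forall z, norm3 (vsub z x) < d -> Omega z.
Hypothesis C1p : C1_on Omega p (fun j => partial j p).
Hypothesis C1dp : forall i, C1_on Omega (partial i p) (fun j => partial j (partial i p)).
Hypothesis C1u : forall k, C1_on Omega (ucomp u k) (fun j => partial j (ucomp u k)).
Hypothesis C1du : forall k l,
  C1_on Omega (partial l (ucomp u k)) (fun j => partial j (partial l (ucomp u k))).
Hypothesis Hdivu : forall y, Omega y -> div u y = 0.
Hypothesis Hpde : forall y, Omega y -> - laplacian p y = div (convect u) y.

Let in_ball r phi theta : Rabs r < d -> Omega (sphere_pt x r phi theta).
Proof. intros H. apply Hball, sphere_pt_in_ball, H. Qed.
Let in_ball' r phi theta : Rabs r < d -> Omega (vadd x (vscal r (sph theta phi))).
Proof. apply in_ball. Qed.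

Let cont_p y : Omega y -> cont_at p y.
Proof. exact (proj1 C1p y). Qed.
Let cont_dp i y : Omega y -> cont_at (partial i p) y.
Proof. exact (proj1 (C1dp i) y). Qed.
Let cont_u k y : Omega y -> cont_at (ucomp u k) y.
Proof. exact (proj1 (C1u k) y). Qed.
Let cont_u' k y : Omega y -> cont_at (fun w => u w k) y.
Proof. exact (proj1 (C1u k) y). Qed.
Let cont_du k l y : Omega y -> cont_at (partial l (ucomp u k)) y.
Proof. exact (proj1 (C1du k l) y). Qed.

Ltac cont_in_ball := cont3_auto; cbv beta;
  first [apply cont_p | apply cont_dp | apply cont_u | apply cont_u' | apply cont_du];
  first [apply in_ball; assumption | apply in_ball'; assumption].

Definition momentum i y := partial i p y + sum3 (fun j => ucomp u j y * partial j (ucomp u i) y).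
Definition momentum_d i l y := partial l (partial i p) y +
  sum3 (fun j => partial l (ucomp u j) y * partial j (ucomp u i) y
                 + ucomp u j y * partial l (partial j (ucomp u i)) y).

Let C1_convect i : C1_on Omega (fun y => sum3 (fun j => ucomp u j y * partial j (ucomp u i) y))
  (fun l y => sum3 (fun j => partial l (ucomp u j) y * partial j (ucomp u i) y
                             + ucomp u j y * partial l (partial j (ucomp u i)) y)).
Proof.
  apply (C1_on_sum3 Omega (fun j y => ucomp u j y * partial j (ucomp u i) y)). intros j.
  apply C1_on_mult; [apply C1u|apply C1du].
Qed.

Lemma C1_on_momentum i : C1_on Omega (momentum i) (momentum_d i).
Proof. apply C1_on_plus; [apply C1dp|apply C1_convect]. Qed.

(* The pressure equation says exactly that [grad p + (u.grad) u] is divergence free. *)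
Lemma div_momentum y : Omega y -> sum3 (fun i => momentum_d i i y) = 0.
Proof.
  intros Hy. pose proof (Hpde y Hy) as H.
  assert (E : forall i, partial i (ucomp (convect u) i) y =
     sum3 (fun j => partial i (ucomp u j) y * partial j (ucomp u i) y
                    + ucomp u j y * partial i (partial j (ucomp u i)) y))
    by (intros i; exact (partial_of_C1_on _ _ _ _ _ Hy (C1_convect i))).
  unfold div, laplacian in H. unfold sum3 in H at 1 2. rewrite !E in H.
  unfold momentum_d, sum3 in *. lra.
Qed.

Definition relative_momentum i y :=
  partial i p y + sum3 (fun j => (ucomp u j y - v j) * partial j (ucomp u i) y).

Lemma flux_relative_momentum rho : 0 < rho < d ->
  sphere_int (flux_integrand x relative_momentum) rho = 0.
Proof.
  intros Hrho. assert (Hd : Rabs rho < d) by (rewrite Rabs_right; lra).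
  set (Dv := fun i y => sum3 (fun j => v j * partial j (ucomp u i) y)).
  rewrite (sphere_int_ext _ (fun r phi theta =>
    flux_integrand x momentum r phi theta + (-1) * flux_integrand x Dv r phi theta))
    by (intros phi theta; unfold flux_integrand, relative_momentum, momentum, Dv, sum3; ring).
  assert (Hcm : jointly_cont d (flux_integrand x momentum))
    by (intros a b c Ha; unfold flux_integrand, momentum, sum3; simpl; cont_in_ball).
  assert (Hcv : jointly_cont d (flux_integrand x Dv))
    by (intros a b c Ha; unfold flux_integrand, Dv, sum3; simpl; cont_in_ball).
  rewrite sphere_int_plus with (R0 := d), sphere_int_scal with (R0 := d); auto using jointly_cont_scal.
  rewrite (flux_divfree_zero Omega x d momentum momentum_d) by (auto using C1_on_momentum, div_momentum; lra).
  unfold Dv. rewrite (flux_directional_derivative_zero Omega x d (ucomp u) (fun i j => partial j (ucomp u i)))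
    by auto. ring.
Qed.

Definition ibp_field j (y : vec3) :=
  p y * (y j - x j) + sum3 (fun k => (y k - x k) * (ucomp u k y - v k)) * (ucomp u j y - v j).
Definition ibp_field_d j l (y : vec3) :=
  (partial l p y * (y j - x j) + p y * (ebasis l j - 0)) +
  (sum3 (fun k => (ebasis l k - 0) * (ucomp u k y - v k) + (y k - x k) * (partial l (ucomp u k) y - 0))
     * (ucomp u j y - v j)
   + sum3 (fun k => (y k - x k) * (ucomp u k y - v k)) * (partial l (ucomp u j) y - 0)).

Lemma C1_on_ibp_field j : C1_on Omega (ibp_field j) (ibp_field_d j).
Proof.
  assert (Hcoord : forall k, C1_on Omega (fun y => y k - x k) (fun l _ => ebasis l k - 0))
    by (intros k; apply C1_on_minus; [apply C1_on_coord|apply C1_on_const]).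
  assert (Hw : forall k, C1_on Omega (fun y => ucomp u k y - v k) (fun l y => partial l (ucomp u k) y - 0))
    by (intros k; apply C1_on_minus; [apply C1u|apply C1_on_const]).
  apply C1_on_plus; [apply C1_on_mult; auto|].
  apply C1_on_mult; [|apply Hw].
  apply (C1_on_sum3 Omega (fun k y => (y k - x k) * (ucomp u k y - v k))). intros k.
  apply C1_on_mult; auto.
Qed.

Definition mean_integrand (r phi theta : R) :=
  p (vadd x (vscal r (sph theta phi))) * sin theta +
  (dot (sph theta phi) (vsub (u (vadd x (vscal r (sph theta phi)))) v)) ^ 2 * sin theta.
Definition mean_integrand_dr (r phi theta : R) :=
  (sum3 (fun j => sph theta phi j * partial j p (sphere_pt x r phi theta))
   + 2 * dot (sph theta phi) (vsub (u (sphere_pt x r phi theta)) v)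
       * sum3 (fun i => sph theta phi i
                        * sum3 (fun j => sph theta phi j * partial j (ucomp u i) (sphere_pt x r phi theta))))
  * sin theta.
Definition defect_integrand (r phi theta : R) :=
  (3 * (dot (sph theta phi) (vsub (u (vadd x (vscal r (sph theta phi)))) v)) ^ 2
   - dot (vsub (u (vadd x (vscal r (sph theta phi)))) v) (vsub (u (vadd x (vscal r (sph theta phi)))) v))
  * sin theta.

Lemma jointly_cont_mean_integrand : jointly_cont d mean_integrand.
Proof. intros a b c Ha. unfold mean_integrand, dot, vsub, sum3. simpl. cont_in_ball. Qed.
Lemma jointly_cont_mean_integrand_dr : jointly_cont d mean_integrand_dr.
Proof. intros a b c Ha. unfold mean_integrand_dr, dot, vsub, sum3. simpl. cont_in_ball. Qed.
Lemma jointly_cont_defect_integrand : jointly_cont d defect_integrand.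
Proof. intros a b c Ha. unfold defect_integrand, dot, vsub, sum3. simpl. cont_in_ball. Qed.
Lemma jointly_cont_flux_relative_momentum : jointly_cont d (flux_integrand x relative_momentum).
Proof. intros a b c Ha. unfold flux_integrand, relative_momentum, sum3. simpl. cont_in_ball. Qed.

Lemma is_derive_mean_integrand r phi theta : Rabs r < d ->
  is_derive (fun z => mean_integrand z phi theta) r (mean_integrand_dr r phi theta).
Proof.
  intros Hd.
  set (w := fun z i => ucomp u i (sphere_pt x z phi theta) - v i).
  set (F := fun z => sum3 (fun i => sph theta phi i * w z i)).
  set (DF := sum3 (fun i => sph theta phi i
        * sum3 (fun j => sph theta phi j * partial j (ucomp u i) (sphere_pt x r phi theta)))).
  assert (HF : is_derive F r DF).
  { apply (is_derive_sum3 (fun i z => sph theta phi i * w z i)). intros i.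
    apply is_derive_Rmult_l. eapply is_derive_eq.
    - apply (is_derive_minus (fun z => ucomp u i (sphere_pt x z phi theta)) (fun _ => v i));
        [|apply is_derive_const].
      apply (proj2 (proj2 (C1u i)) (fun z => sphere_pt x z phi theta) (sph theta phi)).
      + apply in_ball, Hd.
      + intros j. apply is_derive_sphere_pt_r.
    - Req. ring. }
  apply (is_derive_ext (fun z => p (sphere_pt x z phi theta) * sin theta + (F z * F z) * sin theta)).
  { intros t. unfold mean_integrand, F, w, sphere_pt, dot, vsub, sum3, ucomp. simpl. ring. }
  eapply is_derive_eq.
  - apply is_derive_Rplus; apply is_derive_Rmult_r.
    + apply (proj2 (proj2 C1p) (fun z => sphere_pt x z phi theta) (sph theta phi)).
      * apply in_ball, Hd.
      * intros j. apply is_derive_sphere_pt_r.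
    + apply (is_derive_Rmult F F); exact HF.
  - unfold mean_integrand_dr, F, DF, w, sphere_pt, dot, vsub, sum3, ucomp. simpl. ring.
Qed.

Lemma tangential_div_ibp_field r phi theta : Rabs r < d ->
  tangential_div_integrand x ibp_field ibp_field_d r phi theta =
  r * ((-1) * defect_integrand r phi theta + r * flux_integrand x relative_momentum r phi theta
       + (- r) * mean_integrand_dr r phi theta).
Proof.
  intros Hd. pose proof (Hdivu _ (in_ball r phi theta Hd)) as Hdv.
  unfold div, tangential_div_integrand, ibp_field, ibp_field_d, defect_integrand, flux_integrand,
    relative_momentum, mean_integrand_dr, sphere_pt in *.
  set (y := vadd x (vscal r (sph theta phi))) in *.
  assert (E1 : y I1 = x I1 + r * (sin theta * cos phi)) by reflexivity.
  assert (E2 : y I2 = x I2 + r * (sin theta * sin phi)) by reflexivity.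
  assert (E3 : y I3 = x I3 + r * cos theta) by reflexivity.
  unfold ucomp, dot, vsub, sum3, ebasis in *. simpl in *.
  rewrite E1, E2, E3.
  pose proof (sin2_cos2 theta) as H1. pose proof (sin2_cos2 phi) as H2. unfold Rsqr in *.
  nsatz.
Qed.

Lemma defect_eq rho : 0 < rho < d ->
  sphere_int defect_integrand rho = - rho * sphere_int mean_integrand_dr rho.
Proof.
  intros Hrho. assert (Hd : Rabs rho < d) by (rewrite Rabs_right; lra).
  pose proof (sphere_int_tangential_div Omega x d ibp_field ibp_field_d Hball C1_on_ibp_field rho Hd) as H.
  rewrite (sphere_int_ext _ (fun r' phi theta => rho * ((-1) * defect_integrand r' phi theta
      + rho * flux_integrand x relative_momentum r' phi theta + (- rho) * mean_integrand_dr r' phi theta))) in H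
    by (intros; apply tangential_div_ibp_field, Hd).
  rewrite sphere_int_scal with (R0 := d), !sphere_int_plus with (R0 := d), !sphere_int_scal with (R0 := d),
    flux_relative_momentum in H by (auto 6 using jointly_cont_plus, jointly_cont_scal, jointly_cont_defect_integrand,
      jointly_cont_flux_relative_momentum, jointly_cont_mean_integrand_dr).
  apply (Rmult_eq_reg_l rho); [|lra]. nra.
Qed.

Lemma mean_integrand_ftc r : 0 < r < d ->
  RInt (sphere_int mean_integrand_dr) 0 r = sphere_int mean_integrand r - sphere_int mean_integrand 0.
Proof.
  intros Hr. apply is_RInt_unique.
  apply (is_RInt_derive (V:=R_CompleteNormedModule)); intros t Ht;
    rewrite Rmin_left, Rmax_right in Ht by lra; assert (Ht' : Rabs t < d) by (rewrite Rabs_right; lra).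
  - apply (is_derive_sphere_int d); auto using jointly_cont_mean_integrand, jointly_cont_mean_integrand_dr,
      is_derive_mean_integrand.
  - apply (sphere_int_continuous d); auto using jointly_cont_mean_integrand_dr.
Qed.

Lemma sphere_int_mean_integrand_0 :
  sphere_int mean_integrand 0 = 4 * PI * p x + 4 * PI / 3 * dot (vsub (u x) v) (vsub (u x) v).
Proof.
  assert (Hx0 : forall xi, vadd x (vscal 0 xi) = x)
    by (intros; apply vec3_ext; intros i; unfold vadd, vscal; ring).
  rewrite (sphere_int_ext _ (fun _ phi theta =>
      p x * sin theta + (dot (sph theta phi) (vsub (u x) v)) ^ 2 * sin theta))
    by (intros phi theta; unfold mean_integrand; rewrite Hx0; reflexivity).
  assert (Hcont : forall K, (forall a b c, cont3 K a b c) -> jointly_cont 1 K) by (intros K HK a b c _; auto).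
  rewrite sphere_int_plus with (R0 := 1), sphere_int_scal with (R0 := 1), sphere_int_sin, sphere_int_sq_dot.
  - field.
  all: try (rewrite Rabs_R0; lra).
  all: apply Hcont; intros; unfold dot, sum3, sph; simpl; cont3_auto.
Qed.

Lemma sphere_int_mean_integrand r : 0 < r < d ->
  / (4 * PI) * sphere_int mean_integrand r
  = sph_mean p x r + sph_avg (fun xi => (dot xi (vsub (u (vadd x (vscal r xi))) v)) ^ 2).
Proof.
  intros Hr. unfold mean_integrand.
  rewrite sphere_int_plus with (R0 := d); [unfold sph_mean, sph_avg, sphere_int; ring|..];
    [intros a b c Ha; simpl; cont_in_ball|intros a b c Ha; unfold dot, vsub, sum3; simpl; cont_in_ball|].
  rewrite Rabs_right; lra.
Qed.

Lemma pressure_mean_value r : 0 < r < d ->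
  p x + / 3 * dot (vsub (u x) v) (vsub (u x) v)
  = sph_mean p x r
    + sph_avg (fun xi => (dot xi (vsub (u (vadd x (vscal r xi))) v)) ^ 2)
    + RInt (fun rho => / rho *
        sph_avg (fun xi =>
          3 * (dot xi (vsub (u (vadd x (vscal rho xi))) v)) ^ 2
          - dot (vsub (u (vadd x (vscal rho xi))) v)
                (vsub (u (vadd x (vscal rho xi))) v))) 0 r.
Proof.
  intros Hr. assert (HPI : PI <> 0) by (pose proof PI_RGT_0; lra).
  rewrite (RInt_ext _ (fun rho => - / (4 * PI) * sphere_int mean_integrand_dr rho)).
  2: { intros rho Hrho. rewrite Rmin_left, Rmax_right in Hrho by lra.
       change (/ rho * (/ (4 * PI) * sphere_int defect_integrand rho)
               = - / (4 * PI) * sphere_int mean_integrand_dr rho).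
       rewrite defect_eq by lra. field. split; lra. }
  rewrite (RInt_scal (V:=R_CompleteNormedModule)).
  2: { apply (ex_RInt_continuous (V:=R_CompleteNormedModule)). intros t Ht.
       rewrite Rmin_left, Rmax_right in Ht by lra.
       apply (sphere_int_continuous d); [apply jointly_cont_mean_integrand_dr|rewrite Rabs_right; lra]. }
  rewrite <- sphere_int_mean_integrand by exact Hr.
  Req. rewrite mean_integrand_ftc, sphere_int_mean_integrand_0 by exact Hr. field. exact HPI.
Qed.

End PressureMean.

Lemma Ck1_of_Ck2 O f : Ck 2 O f -> Ck 1 O f.
Proof. intros [Hc Hi]. split; [exact Hc|]. intros i. destruct (Hi i) as [Hd [Hc' _]]. split; auto. Qed.

Lemma Ck1_partial_of_Ck2 O f i : Ck 2 O f -> Ck 1 O (partial i f).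
Proof. intros [_ Hi]. apply (proj2 (Hi i)). Qed.

Theorem lemma2 (Omega : vec3 -> Prop) (x : vec3) (r : R)
  (u : vec3 -> vec3) (v : vec3) (p : vec3 -> R) :
  open3 Omega ->
  Omega x ->
  0 < r ->
  lt_dist_boundary r x Omega ->
  (forall i, Ck 2 Omega (ucomp u i)) ->
  (forall y, Omega y -> div u y = 0) ->
  Ck 2 Omega p ->
  (forall y, Omega y -> - laplacian p y = div (convect u) y) ->
  p x + / 3 * dot (vsub (u x) v) (vsub (u x) v)
  = sph_mean p x r
    + sph_avg (fun xi => (dot xi (vsub (u (vadd x (vscal r xi))) v)) ^ 2)
    + RInt (fun rho => / rho *
        sph_avg (fun xi =>
          3 * (dot xi (vsub (u (vadd x (vscal rho xi))) v)) ^ 2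
          - dot (vsub (u (vadd x (vscal rho xi))) v)
                (vsub (u (vadd x (vscal rho xi))) v))) 0 r.
Proof.
  intros Hop Hx Hr [d [Hrd Hdist]] Hu Hdiv Hp Hpde.
  apply (pressure_mean_value Omega x d u v p); auto.
  - exact (ball_subset_of_boundary_dist Omega x d Hop Hx Hdist).
  - apply C1_on_of_Ck1, Ck1_of_Ck2; auto.
  - intros i. apply C1_on_of_Ck1, Ck1_partial_of_Ck2; auto.
  - intros k. apply C1_on_of_Ck1, Ck1_of_Ck2; auto.
  - intros k l. apply C1_on_of_Ck1, Ck1_partial_of_Ck2; auto.
Qed.
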